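(* Let $a=\rho\cos\theta$, $b=\rho\sin\theta$ with $\rho\ge 1$ and $0<a<1/2$. Let $\Lambda=\{u_1(1,0)+u_2(a,b): u_1,u_2\in\mathbb{Z}\}$ and let $\mathcal{V}_{\mathbf 0}$ be its Voronoi cell at the origin. Let $\mathbf{X}=(X_1,X_2)$ be uniformly distributed on the Babai cell $\mathcal{B}_{\mathbf 0}=[-1/2,1/2)\times[-b/2,b/2)$, with $X_1$ known only to node-1 and $X_2$ known only to node-2. Run the bit-exchange protocol described in the context. Then the protocol halts with probability one, and when it halts both nodes know the nearest lattice point to $\mathbf{X}$, i.e. the error probability is $0$. Moreover, with $Q=(Q_{-1},Q_0,Q_1)$, $Q_i=\Pr(W_2=i)$, and $P=(P_{-1},P_0,P_1)$, $P_i=\Pr(W_1=i\mid W_2=1)$, the expected total number of communicated bits and the expected number of rounds are finite and equal to $$\bar R=E[R(\mathbf{X})]=H(Q)+(1-Q_0)H(P)+4(1-P_0)(1-Q_0),\qquad \bar N=E[N(\mathbf{X})]=1+2(1-P_0)(1-Q_0),$$ where $H(\cdot)$ denotes the base-2 entropy of a probability vector.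
   Context: Notation: $a=\rho\cos\theta$, $b=\rho\sin\theta$, $\rho\ge1$, $0<a<1/2$. The lattice $\Lambda$ has generator matrix $\begin{pmatrix}1&a\\0&b\end{pmatrix}$ (columns are basis vectors). $\mathcal{V}_{\mathbf 0}$ is the set of points of $\mathbb{R}^2$ whose nearest lattice point is $\mathbf 0$; its boundary is formed by the perpendicular bisectors of $\pm(1,0)$, $\pm(a,b)$, $\pm(a-1,b)$. The Babai cell at the origin is $\mathcal{B}_{\mathbf 0}=[-1/2,1/2)\times[-b/2,b/2)$. Thresholds and intervals: let $\tau_1=b/2-\frac{a(1-a)}{2b}$ and $\tau_{-1}=-\tau_1$; define $\mathcal J_{-1}=[-b/2,\tau_{-1}]$, $\mathcal J_0=(\tau_{-1},\tau_1]$, $\mathcal J_1=(\tau_1,b/2)$. Define $\mathcal I_{-1}=[-1/2,(a-1)/2]$, $\mathcal I_0=((a-1)/2,a/2]$, $\mathcal I_1=(a/2,1/2)$. Protocol. Round 1: node-2 sends $W_2=i$ where $X_2\in\mathcal J_i$. If $W_2=0$ nothing further is sent in round 1. If $W_2=1$, node-1 sends $W_1=i$ where $X_1\in\mathcal I_i$; if $W_2=-1$, node-1 sends $W_1=i$ where $-X_1\in\mathcal I_i$. Round-1 messages are encoded with ideal entropy-code lengths: $W_2=i$ costs $\log_2(1/Q_i)$ bits and, when sent, $W_1=i$ costs $\log_2(1/\Pr(W_1=i\mid W_2))$ bits (by symmetry $\Pr(W_1=i\mid W_2=-1)=P_i$). After round 1 both nodes know a rectangle (product of an $X_1$-interval and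 an $X_2$-interval) containing $\mathbf{X}$. A rectangle is called error-free if its interior does not intersect the boundary of $\mathcal{V}_{\mathbf 0}$ (hence all its interior points have the same nearest lattice point). If the current rectangle is error-free, communication halts. Otherwise (this happens exactly when $W_2\neq0$ and $W_1\neq0$, and then a boundary segment of $\mathcal{V}_{\mathbf 0}$ is a diagonal of the current rectangle), in each subsequent round node-1 sends one bit indicating which half (left/right) of its current interval contains $X_1$, and node-2 sends one bit indicating which half of its current interval contains $X_2$; the current rectangle is replaced by the resulting quarter, and communication halts at the end of the first round in which the current rectangle is error-free. $N(\mathbf{X})$ is the number of rounds (round 1 included) and $R(\mathbf{X})$ is the total number of bits sent (round-1 code lengths plus $2$ bits per later round). For reference, these distributions are explicitly $Q_1=Q_{-1}=\frac{a(1-a)}{2b^2}$, $Q_0=1-2Q_1$, and $P=(a/2,\,1/2,\,(1-a)/2)$. *)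

From Stdlib Require Import Reals Lra ZArith Arith ClassicalEpsilon.
Open Scope R_scope.

Definition lat (a b : R) (u1 u2 : Z) : R * R :=
  (IZR u1 + a * IZR u2, b * IZR u2).

Definition dist2 (p q : R * R) : R :=
  (fst p - fst q) ^ 2 + (snd p - snd q) ^ 2.

Definition InV0 (a b : R) (p : R * R) : Prop :=
  forall u1 u2 : Z, dist2 p (0, 0) <= dist2 p (lat a b u1 u2).

Definition BdV0 (a b : R) (p : R * R) : Prop :=
  InV0 a b p /\
  forall eps : R, 0 < eps -> exists q : R * R, dist2 q p < eps /\ ~ InV0 a b q.

Definition UniqueNearest (a b : R) (p : R * R) (u1 u2 : Z) : Prop :=
  forall v1 v2 : Z, (v1, v2) <> (u1, u2) ->
    dist2 p (lat a b u1 u2) < dist2 p (lat a b v1 v2).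

(** * Rectangles known to both nodes *)

Record rect := mkRect { r_l1 : R; r_u1 : R; r_l2 : R; r_u2 : R }.

Definition InInterior (r : rect) (p : R * R) : Prop :=
  r_l1 r < fst p < r_u1 r /\ r_l2 r < snd p < r_u2 r.

Definition ErrFree (a b : R) (r : rect) : Prop :=
  ~ (exists p, InInterior r p /\ BdV0 a b p).

Definition tau1 (a b : R) : R := b / 2 - a * (1 - a) / (2 * b).

Definition Jlo (a b : R) (i : Z) : R :=
  if (i =? -1)%Z then - b / 2 else if (i =? 0)%Z then - tau1 a b else tau1 a b.
Definition Jhi (a b : R) (i : Z) : R :=
  if (i =? -1)%Z then - tau1 a b else if (i =? 0)%Z then tau1 a b else b / 2.
Definition Ilo (a : R) (i : Z) : R :=
  if (i =? -1)%Z then - / 2 else if (i =? 0)%Z then (a - 1) / 2 else a / 2.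
Definition Ihi (a : R) (i : Z) : R :=
  if (i =? -1)%Z then (a - 1) / 2 else if (i =? 0)%Z then a / 2 else / 2.

(** Q_i = Pr(W2 = i) and P_i = Pr(W1 = i | W2 = 1) for X uniform on the
    Babai cell (lengths of the intervals divided by the total length). *)
Definition Qd (a b : R) (i : Z) : R := (Jhi a b i - Jlo a b i) / b.
Definition Pd (a : R) (i : Z) : R := Ihi a i - Ilo a i.

Definition W2 (a b x2 : R) : Z :=
  if Rle_dec x2 (- tau1 a b) then (-1)%Z
  else if Rle_dec x2 (tau1 a b) then 0%Z else 1%Z.

Definition Iidx (a s : R) : Z :=
  if Rle_dec s ((a - 1) / 2) then (-1)%Z
  else if Rle_dec s (a / 2) then 0%Z else 1%Z.

(** W1 (only meaningful when W2 <> 0). *)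
Definition W1 (a b : R) (x : R * R) : Z :=
  let w2 := W2 a b (snd x) in
  if (w2 =? 1)%Z then Iidx a (fst x)
  else if (w2 =? -1)%Z then Iidx a (- fst x) else 0%Z.

Definition rect1 (a b : R) (x : R * R) : rect :=
  let w2 := W2 a b (snd x) in
  let w1 := W1 a b x in
  if (w2 =? 0)%Z then mkRect (- / 2) (/ 2) (Jlo a b w2) (Jhi a b w2)
  else if (w2 =? 1)%Z then mkRect (Ilo a w1) (Ihi a w1) (Jlo a b w2) (Jhi a b w2)
  else mkRect (- Ihi a w1) (- Ilo a w1) (Jlo a b w2) (Jhi a b w2).

(** One later round: each node reports which half of its interval
    contains its coordinate. *)
Definition quarter (r : rect) (x : R * R) : rect :=
  let m1 := (r_l1 r + r_u1 r) / 2 in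
  let m2 := (r_l2 r + r_u2 r) / 2 in
  mkRect (if Rlt_dec (fst x) m1 then r_l1 r else m1)
         (if Rlt_dec (fst x) m1 then m1 else r_u1 r)
         (if Rlt_dec (snd x) m2 then r_l2 r else m2)
         (if Rlt_dec (snd x) m2 then m2 else r_u2 r).

(** [rectn a b x k] = rectangle known at the end of round k+1. *)
Fixpoint rectn (a b : R) (x : R * R) (k : nat) : rect :=
  match k with
  | O => rect1 a b x
  | S k' => quarter (rectn a b x k') x
  end.

(** N(x) = n : communication halts at the end of round n (n >= 1). *)
Definition HaltsAt (a b : R) (x : R * R) (n : nat) : Prop :=
  match n with
  | O => False
  | S k => ErrFree a b (rectn a b x k) /\
           forall j, (j < k)%nat -> ~ ErrFree a b (rectn a b x j)
  end.

(** Correct decision when halting at round n: x has a unique nearest lattice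
    point, and it is the common unique nearest lattice point of all interior
    points of the final rectangle (so both nodes know it). *)
Definition CorrectAt (a b : R) (x : R * R) (n : nat) : Prop :=
  exists u1 u2 : Z, UniqueNearest a b x u1 u2 /\
    forall p, InInterior (rectn a b x (n - 1)) p -> UniqueNearest a b p u1 u2.

Definition log2 (x : R) : R := ln x / ln 2.

Definition cost1 (a b : R) (x : R * R) : R :=
  let w2 := W2 a b (snd x) in
  log2 (/ Qd a b w2) +
  (if (w2 =? 0)%Z then 0 else log2 (/ Pd a (W1 a b x))).

Definition RcostAt (a b : R) (x : R * R) (n : nat) : R :=
  cost1 a b x + 2 * INR (n - 1).

Definition H3 (p0 p1 p2 : R) : R :=
  - (p0 * log2 p0 + p1 * log2 p1 + p2 * log2 p2).

Definition Rbar (a b : R) : R :=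
  H3 (Qd a b (-1)) (Qd a b 0) (Qd a b 1)
  + (1 - Qd a b 0) * H3 (Pd a (-1)) (Pd a 0) (Pd a 1)
  + 4 * (1 - Pd a 0) * (1 - Qd a b 0).

Definition Nbar (a b : R) : R := 1 + 2 * (1 - Pd a 0) * (1 - Qd a b 0).

Definition indic (P : Prop) : R :=
  if excluded_middle_informative P then 1 else 0.

Definition RInt_is (f : R -> R) (lo hi v : R) : Prop :=
  exists pr : Riemann_integrable f lo hi, RiemannInt pr = v.

Definition Int2_is (b : R) (F : R -> R -> R) (v : R) : Prop :=
  exists g : R -> R,
    (forall x1, - / 2 <= x1 <= / 2 -> RInt_is (fun x2 => F x1 x2) (- b / 2) (b / 2) (g x1)) /\
    RInt_is g (- / 2) (/ 2) v.

(* The Voronoi cell of [0] is the hexagon cut out by the six relevant vectors [+-(1,0)], [+-(a,b)],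
   [+-(a-1,b)]: since [rho >= 1] and [a < 1/2], every other lattice point is strictly farther from
   any point of it. The thresholds [+-tau1] and the cut points [(a-1)/2], [a/2] are chosen so that a
   round-1 rectangle either lies in the closure of a single Voronoi cell, and is error-free, or is
   crossed by exactly one Voronoi edge, running along one of its diagonals. In the second case the
   later rounds refine the rectangle dyadically and a cell is error-free iff it is off the diagonal;
   in each column exactly one cell leaves the diagonal per round, so every slice [x1 = const] meets
   [{N = n}] in a set of length [2^-(n-1)] times the height. Integrating over [x1] makes
   [Pr(N = n)] and [E[R 1{N = n}]] geometric-times-affine in [n], whose sums are the formulas. Errors
   occur only on the diagonals and on the edges [x1 = +-1/2], a null set. *)

From Coquelicot Require Import Coquelicot.
From Stdlib Require Import Reals ZArith List Lra Lia Psatz ClassicalEpsilon.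
Import ListNotations.
Open Scope R_scope.

(** * Voronoi cell of the origin *)

Definition lattice_params (a b : R) : Prop := 0 < a < / 2 /\ 0 < b /\ 1 <= a * a + b * b.

(* [slack a b q1 y v1 v2] is [|v|^2 - 2 <q, v>] for [v = lat a b v1 v2] and [y = b * q2]; it is
   positive iff [q] is strictly closer to [0] than to [v]. *)
Definition slack (a b q1 y : R) (v1 v2 : Z) : R :=
  let s := IZR v1 + a * IZR v2 in let k := IZR v2 in
  s * s + b * b * k * k - 2 * (q1 * s + y * k).

(* The slacks of the six relevant vectors [(1,0)], [(-1,0)], [(a,b)], [(-a,-b)], [(a-1,b)], [(1-a,-b)]. *)
Definition hex_weak (a b q1 y : R) : Prop :=
  0 <= 1 - 2 * q1 /\ 0 <= 1 + 2 * q1 /\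
  0 <= a * a + b * b - 2 * (a * q1 + y) /\ 0 <= a * a + b * b + 2 * (a * q1 + y) /\
  0 <= (a - 1) * (a - 1) + b * b - 2 * ((a - 1) * q1 + y) /\
  0 <= (a - 1) * (a - 1) + b * b + 2 * ((a - 1) * q1 + y).

Definition hex_strict (a b q1 y : R) : Prop :=
  0 < 1 - 2 * q1 /\ 0 < 1 + 2 * q1 /\
  0 < a * a + b * b - 2 * (a * q1 + y) /\ 0 < a * a + b * b + 2 * (a * q1 + y) /\
  0 < (a - 1) * (a - 1) + b * b - 2 * ((a - 1) * q1 + y) /\
  0 < (a - 1) * (a - 1) + b * b + 2 * ((a - 1) * q1 + y).

Lemma hex_strict_weak a b q1 y : hex_strict a b q1 y -> hex_weak a b q1 y.
Proof. unfold hex_strict, hex_weak; intuition lra. Qed.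

Definition relevant_vectors : list (Z * Z) :=
  [(0, 0); (1, 0); (-1, 0); (0, 1); (0, -1); (-1, 1); (1, -1)]%Z.

Lemma slack_far_pos a b q1 y (V K : Z) : lattice_params a b -> hex_weak a b q1 y ->
  ~ In (V, K) relevant_vectors -> 0 < slack a b q1 y V K.
Proof.
  intros [[Ha1 Ha2] [Hb Hab]] (h1 & h2 & h3 & h4 & h5 & h6) Hout.
  unfold slack.
  assert (Hy1 : 2 * y <= b * b + a * (1 - a)) by nra.
  assert (Hy2 : - (b * b + a * (1 - a)) <= 2 * y) by nra.
  assert (Hbb : 3 / 4 < b * b) by nra.
  assert (Ha4 : a * (1 - a) <= 1 / 4)
    by (assert (0 <= (a - 1 / 2) * (a - 1 / 2)) by apply Rle_0_sqr; nra).
  set (S := IZR V + a * IZR K).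
  assert (HS : S * S - 2 * q1 * S >= - (1 / 4))
    by (assert (0 <= (S - q1) * (S - q1)) by apply Rle_0_sqr; nra).
  destruct (Z_lt_le_dec 1 K) as [HK|HK].
  { assert (HK' : 2 <= IZR K) by (apply IZR_le; lia). set (k := IZR K) in *.
    assert (2 * y * k <= k * (b * b + 1 / 4)) by nra.
    assert (0 <= (b * b - 3 / 4) * (k * (k - 1))) by (apply Rmult_le_pos; nra).
    nra. }
  destruct (Z_lt_le_dec K (-1)) as [HK2|HK2].
  { assert (HK' : IZR K <= -2) by (apply IZR_le; lia). set (k := IZR K) in *.
    assert (2 * y * (- k) <= (- k) * (b * b + 1 / 4)) by nra.
    assert (0 <= (b * b - 3 / 4) * (k * (k - 1))) by (apply Rmult_le_pos; nra).
    nra. }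
  assert (K = 0 \/ K = 1 \/ K = -1)%Z as [E|[E|E]] by lia; subst K; unfold S; simpl IZR.
  - destruct (Z_le_gt_dec 2 V); [|destruct (Z_le_gt_dec V (-2))];
      [| | assert (V = 0 \/ V = 1 \/ V = -1)%Z as [-> | [-> | ->]] by lia; exfalso; apply Hout; simpl; auto 8].
    + assert (2 <= IZR V) by (apply IZR_le; lia). nra.
    + assert (IZR V <= -2) by (apply IZR_le; lia). nra.
  - destruct (Z_le_gt_dec 1 V); [|destruct (Z_le_gt_dec V (-2))];
      [| | assert (V = -1 \/ V = 0)%Z as [-> | ->] by lia; exfalso; apply Hout; simpl; auto 8].
    + assert (1 <= IZR V) by (apply IZR_le; lia). nra.
    + assert (IZR V <= -2) by (apply IZR_le; lia). nra.
  - destruct (Z_le_gt_dec 2 V); [|destruct (Z_le_gt_dec V (-1))];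
      [| | assert (V = 0 \/ V = 1)%Z as [-> | ->] by lia; exfalso; apply Hout; simpl; auto 8].
    + assert (2 <= IZR V) by (apply IZR_le; lia). nra.
    + assert (IZR V <= -1) by (apply IZR_le; lia). nra.
Qed.

Lemma Zpair_eq_dec (p q : Z * Z) : {p = q} + {p <> q}.
Proof. decide equality; apply Z.eq_dec. Qed.

Ltac relevant_cases Hin :=
  simpl in Hin; repeat destruct Hin as [Hin|Hin]; try contradiction;
  injection Hin as <- <-; unfold slack; simpl IZR.

Lemma slack_nonneg a b q1 y v1 v2 : lattice_params a b -> hex_weak a b q1 y ->
  0 <= slack a b q1 y v1 v2.
Proof.
  intros H Hw. destruct (in_dec Zpair_eq_dec (v1, v2) relevant_vectors) as [Hin|Hout].
  - destruct Hw as (h1 & h2 & h3 & h4 & h5 & h6). relevant_cases Hin; lra.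
  - apply Rlt_le, slack_far_pos; auto.
Qed.

Lemma slack_pos a b q1 y v1 v2 : lattice_params a b -> hex_strict a b q1 y ->
  (v1, v2) <> (0%Z, 0%Z) -> 0 < slack a b q1 y v1 v2.
Proof.
  intros H Hs Hnz. destruct (in_dec Zpair_eq_dec (v1, v2) relevant_vectors) as [Hin|Hout].
  - destruct Hs as (h1 & h2 & h3 & h4 & h5 & h6). relevant_cases Hin; lra || congruence.
  - apply slack_far_pos; auto using hex_strict_weak.
Qed.

Lemma dist2_lat_sub a b p u1 u2 v1 v2 :
  dist2 p (lat a b v1 v2) - dist2 p (lat a b u1 u2) =
  slack a b (fst p - (IZR u1 + a * IZR u2)) (b * snd p - b * b * IZR u2) (v1 - u1) (v2 - u2).
Proof. destruct p; unfold dist2, lat, slack; simpl; rewrite !minus_IZR; ring. Qed.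

Lemma lat_origin a b : lat a b 0 0 = (0, 0).
Proof. unfold lat; f_equal; simpl; ring. Qed.

Lemma dist2_lat_sub_origin a b p v1 v2 :
  dist2 p (lat a b v1 v2) - dist2 p (0, 0) = slack a b (fst p) (b * snd p) v1 v2.
Proof.
  rewrite <- (lat_origin a b), dist2_lat_sub, !Z.sub_0_r.
  f_equal; simpl; ring.
Qed.

Lemma UniqueNearest_of_hex_strict a b p u1 u2 : lattice_params a b ->
  hex_strict a b (fst p - (IZR u1 + a * IZR u2)) (b * snd p - b * b * IZR u2) ->
  UniqueNearest a b p u1 u2.
Proof.
  intros H Hs v1 v2 nv. apply Rlt_0_minus. rewrite dist2_lat_sub.
  apply slack_pos; auto. intro E. injection E; intros. apply nv. f_equal; lia.
Qed.

Lemma InV0_of_hex_weak a b p : lattice_params a b -> hex_weak a b (fst p) (b * snd p) -> InV0 a b p.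
Proof.
  intros H Hw v1 v2. pose proof (slack_nonneg a b _ _ v1 v2 H Hw) as S.
  rewrite <- dist2_lat_sub_origin in S. lra.
Qed.

Lemma InV0_of_UniqueNearest_origin a b p : UniqueNearest a b p 0 0 -> InV0 a b p.
Proof.
  intros U v1 v2. rewrite <- (lat_origin a b).
  destruct (Z.eq_dec v1 0) as [->|]; [destruct (Z.eq_dec v2 0) as [->|]|];
    [lra | left; apply U; congruence ..].
Qed.

(* A point of [BdV0] in the interior of the rectangle has points outside [InV0] arbitrarily close;
   they are still in the interior, where the nearest lattice point is unique, hence [0]. *)
Lemma ErrFree_of_UniqueNearest a b r u1 u2 :
  (forall p, InInterior r p -> UniqueNearest a b p u1 u2) -> ErrFree a b r.
Proof.
  intros G [p [Hi [Hv Hb]]].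
  destruct (Z.eq_dec u1 0) as [E1|n1]; [destruct (Z.eq_dec u2 0) as [E2|n2]|].
  2,3: assert (X := G p Hi 0%Z 0%Z); rewrite lat_origin in X;
       specialize (Hv u1 u2); assert (dist2 p (lat a b u1 u2) < dist2 p (0, 0)) by (apply X; congruence);
       lra.
  subst.
  destruct r as [l1 h1 l2 h2], p as [p1 p2], Hi as [[A1 A2] [A3 A4]]; simpl in *.
  set (d := Rmin (Rmin (p1 - l1) (h1 - p1)) (Rmin (p2 - l2) (h2 - p2))).
  assert (Hd : 0 < d) by (unfold d; repeat apply Rmin_glb_lt; lra).
  assert (d <= p1 - l1 /\ d <= h1 - p1 /\ d <= p2 - l2 /\ d <= h2 - p2) as (D1 & D2 & D3 & D4).
  { unfold d; repeat split; eauto using Rle_trans, Rmin_l, Rmin_r. }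
  destruct (Hb (d * d)) as [[q1 q2] [Dq Nq]]; [nra|].
  apply Nq, InV0_of_UniqueNearest_origin, G. unfold dist2 in Dq; simpl in Dq.
  assert (0 <= (q1 - p1) ^ 2) by apply pow2_ge_0. assert (0 <= (q2 - p2) ^ 2) by apply pow2_ge_0.
  assert (-d < q1 - p1 < d) by (split; nra).
  assert (-d < q2 - p2 < d) by (split; nra).
  unfold InInterior; simpl. lra.
Qed.

(* Points equidistant from [0] and [w] leave the Voronoi cell when pushed towards [w]. *)
Lemma BdV0_of_equidistant a b p w1 w2 : lattice_params a b ->
  hex_weak a b (fst p) (b * snd p) -> slack a b (fst p) (b * snd p) w1 w2 = 0 ->
  (w1, w2) <> (0%Z, 0%Z) -> BdV0 a b p.
Proof.
  intros H Hw Hs Hnz. split; [apply InV0_of_hex_weak; auto|].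
  rewrite <- dist2_lat_sub_origin in Hs.
  assert (HN : 0 < fst (lat a b w1 w2) ^ 2 + snd (lat a b w1 w2) ^ 2).
  { destruct H as [_ [Hb _]]. unfold lat; simpl.
    destruct (Z.eq_dec w2 0) as [->|n2].
    - assert (IZR w1 <> 0) by (apply not_0_IZR; congruence).
      pose proof (pow2_gt_0 _ H). pose proof (pow2_ge_0 (b * IZR 0)). simpl IZR in *. nra.
    - assert (IZR w2 <> 0) by (apply not_0_IZR; auto).
      assert (b * IZR w2 <> 0) by (apply Rmult_integral_contrapositive; split; lra).
      pose proof (pow2_gt_0 _ H0). pose proof (pow2_ge_0 (IZR w1 + a * IZR w2)). lra. }
  intros eps Heps.
  destruct p as [c1 c2]. destruct (lat a b w1 w2) as [z1 z2] eqn:Ew. cbn [fst snd] in HN.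
  set (N := z1 ^ 2 + z2 ^ 2) in *.
  set (e := Rmin 1 (eps / (N + 1))).
  assert (He1 : 0 < e) by (unfold e; apply Rmin_glb_lt; [lra | apply Rdiv_lt_0_compat; lra]).
  assert (He2 : e * (N + 1) <= eps).
  { assert (e <= eps / (N + 1)) by apply Rmin_r.
    apply (Rmult_le_compat_r (N + 1)) in H0; [|lra].
    unfold Rdiv in H0; rewrite Rmult_assoc, Rinv_l in H0; lra. }
  assert (He3 : e <= 1) by apply Rmin_l.
  exists (c1 + e * z1, c2 + e * z2). split.
  - unfold dist2; cbn [fst snd].
    replace ((c1 + e * z1 - c1) ^ 2 + (c2 + e * z2 - c2) ^ 2) with (e * e * N) by (unfold N; ring).
    assert (e * (e * (N + 1)) <= e * eps) by (apply Rmult_le_compat_l; lra).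
    nra.
  - intro I. specialize (I w1 w2). rewrite Ew in I. unfold dist2 in *; simpl in *.
    assert (Hcz : 2 * (c1 * z1 + c2 * z2) = N) by (unfold N; lra).
    assert (0 < e * N) by (apply Rmult_lt_0_compat; lra).
    assert (2 * e * (c1 * z1 + c2 * z2) = e * N) by (rewrite <- Hcz; ring).
    unfold N in *. nra.
Qed.

(** * Dyadic refinement *)

Definition cell_width (L U : R) (k : nat) : R := (U - L) / 2 ^ k.

(* The dyadic cell of [[L, U]] containing [s] after [k] halving rounds. *)
Fixpoint cell_index (L U s : R) (k : nat) : nat :=
  match k with
  | O => O
  | S k' => let j := cell_index L U s k' in
    if Rlt_dec s (((L + INR j * cell_width L U k') + (L + INR (S j) * cell_width L U k')) / 2)
    then (2 * j)%nat else S (2 * j)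
  end.

Definition cell_lo L U s k := L + INR (cell_index L U s k) * cell_width L U k.
Definition cell_hi L U s k := L + INR (S (cell_index L U s k)) * cell_width L U k.

Lemma cell_width_S L U k : cell_width L U (S k) = cell_width L U k / 2.
Proof. unfold cell_width; simpl; field; apply pow_nonzero; lra. Qed.

Lemma cell_width_pos L U k : L < U -> 0 < cell_width L U k.
Proof. intro; unfold cell_width; apply Rdiv_lt_0_compat; [lra | apply pow_lt; lra]. Qed.

Lemma rectn_cells a b x k :
  let r := rect1 a b x in
  rectn a b x k =
  mkRect (cell_lo (r_l1 r) (r_u1 r) (fst x) k) (cell_hi (r_l1 r) (r_u1 r) (fst x) k)
         (cell_lo (r_l2 r) (r_u2 r) (snd x) k) (cell_hi (r_l2 r) (r_u2 r) (snd x) k).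
Proof.
  intro r. induction k as [|k IH].
  - unfold cell_lo, cell_hi, cell_width; simpl; fold r.
    destruct r as [l1 u1 l2 u2]; simpl; f_equal; field.
  - simpl rectn. rewrite IH. unfold quarter, cell_lo, cell_hi. cbn [r_l1 r_u1 r_l2 r_u2 cell_index].
    destruct (Rlt_dec (fst x) _); destruct (Rlt_dec (snd x) _); rewrite ?cell_width_S.
    all: f_equal; rewrite ?S_INR, ?mult_INR; simpl; field.
Qed.

Lemma cell_index_lt L U s k : (cell_index L U s k < 2 ^ k)%nat.
Proof. induction k as [|k IH]; simpl; [lia | destruct (Rlt_dec _ _); lia]. Qed.

Lemma cell_index_S L U s k :
  cell_index L U s (S k) = (2 * cell_index L U s k)%nat \/
  cell_index L U s (S k) = S (2 * cell_index L U s k).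
Proof. simpl; destruct (Rlt_dec _ _); auto. Qed.

Lemma cell_index_closed L U s k : L < U -> L <= s <= U ->
  cell_lo L U s k <= s <= cell_hi L U s k.
Proof.
  intros HLU Hs. unfold cell_lo, cell_hi. induction k as [|k IH].
  - unfold cell_width; simpl; lra.
  - cbn [cell_index]. set (j := cell_index L U s k) in *. rewrite cell_width_S.
    destruct (Rlt_dec _ _); rewrite ?S_INR, ?mult_INR in *; simpl INR in *; lra.
Qed.

Lemma cell_index_open L U s k m : L < U -> (m < 2 ^ k)%nat ->
  L + INR m * cell_width L U k < s < L + INR (S m) * cell_width L U k -> cell_index L U s k = m.
Proof.
  intros HLU. revert m. induction k as [|k IH]; intros m Hm Hs.
  - simpl in Hm; simpl; lia.
  - cbn [cell_index]. assert (Hh := cell_width_pos L U k HLU).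
    destruct (Nat.Even_or_Odd m) as [[q ->]|[q ->]].
    + rewrite (IH q); [| simpl in Hm; lia |
        rewrite cell_width_S, S_INR, mult_INR in Hs; rewrite S_INR; simpl INR in *; lra].
      destruct (Rlt_dec _ _) as [Hl|Hl]; [reflexivity|].
      exfalso. apply Hl. rewrite cell_width_S, !S_INR, !mult_INR in *. simpl INR in *. lra.
    + rewrite (IH q); [| simpl in Hm; lia |
        rewrite cell_width_S, S_INR, plus_INR, mult_INR in Hs; rewrite S_INR; simpl INR in *; lra].
      destruct (Rlt_dec _ _) as [Hl|Hl]; [|lia].
      exfalso. rewrite cell_width_S, !S_INR, plus_INR, !mult_INR in *. simpl INR in *. lra.
Qed.

Lemma INR_pow2 k : INR (2 ^ k) = 2 ^ k.
Proof. rewrite pow_INR; reflexivity. Qed.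

Lemma cell_sub_interval L U k j s : L < U -> (j < 2 ^ k)%nat ->
  L + INR j * cell_width L U k <= s <= L + INR (S j) * cell_width L U k -> L <= s <= U.
Proof.
  intros H1 H2 H3. assert (Hh := cell_width_pos L U k H1).
  assert (INR (S j) <= 2 ^ k) by (rewrite <- INR_pow2; apply le_INR; lia).
  assert (0 <= INR j) by apply pos_INR.
  assert (2 ^ k * cell_width L U k = U - L) by (unfold cell_width; field; apply pow_nonzero; lra).
  split; nra.
Qed.

(** * Rectangles cut by a Voronoi edge *)

(* A rectangle cut by its main diagonal, or by its anti-diagonal when [anti] holds; [(neg1, neg2)]
   and [(pos1, pos2)] are the nearest lattice points below and above the cut. *)
Record diag_rect := mkDiagRect
  { dl1 : R; du1 : R; dl2 : R; du2 : R; anti : bool; neg1 : Z; neg2 : Z; pos1 : Z; pos2 : Z }.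

Definition frac (L U s : R) : R := (s - L) / (U - L).

Definition diag_height (d : diag_rect) (p : R * R) : R :=
  if anti d then frac (dl1 d) (du1 d) (fst p) + frac (dl2 d) (du2 d) (snd p) - 1
  else frac (dl2 d) (du2 d) (snd p) - frac (dl1 d) (du1 d) (fst p).

Definition in_diag_rect (d : diag_rect) (p : R * R) : Prop :=
  dl1 d <= fst p <= du1 d /\ dl2 d < snd p < du2 d.

Definition diag_rect_ok (a b : R) (d : diag_rect) : Prop :=
  dl1 d < du1 d /\ dl2 d < du2 d /\
  forall p, in_diag_rect d p ->
    (diag_height d p < 0 -> UniqueNearest a b p (neg1 d) (neg2 d)) /\
    (0 < diag_height d p -> UniqueNearest a b p (pos1 d) (pos2 d)) /\
    (diag_height d p = 0 -> BdV0 a b p).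

Definition cell (d : diag_rect) (k j1 j2 : nat) : rect :=
  mkRect (dl1 d + INR j1 * cell_width (dl1 d) (du1 d) k)
         (dl1 d + INR (S j1) * cell_width (dl1 d) (du1 d) k)
         (dl2 d + INR j2 * cell_width (dl2 d) (du2 d) k)
         (dl2 d + INR (S j2) * cell_width (dl2 d) (du2 d) k).

Definition on_diag (d : diag_rect) (k j1 j2 : nat) : Prop :=
  if anti d then (j1 + j2 + 1 = 2 ^ k)%nat else j1 = j2.
Definition above_diag (d : diag_rect) (k j1 j2 : nat) : Prop :=
  if anti d then (2 ^ k < j1 + j2 + 1)%nat else (j1 < j2)%nat.
Definition below_diag (d : diag_rect) (k j1 j2 : nat) : Prop :=
  if anti d then (j1 + j2 + 1 < 2 ^ k)%nat else (j2 < j1)%nat.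

Lemma diag_cases d k j1 j2 : on_diag d k j1 j2 \/ above_diag d k j1 j2 \/ below_diag d k j1 j2.
Proof. unfold on_diag, above_diag, below_diag; destruct (anti d); lia. Qed.

Lemma scaled_frac_spec L U k s : L < U -> s = L + (2 ^ k * frac L U s) * cell_width L U k.
Proof. intro; unfold frac, cell_width; field; split; [apply pow_nonzero | ]; lra. Qed.

Lemma scaled_diag_height d k p :
  2 ^ k * diag_height d p =
  if anti d then 2 ^ k * frac (dl1 d) (du1 d) (fst p) + 2 ^ k * frac (dl2 d) (du2 d) (snd p) - 2 ^ k
  else 2 ^ k * frac (dl2 d) (du2 d) (snd p) - 2 ^ k * frac (dl1 d) (du1 d) (fst p).
Proof. unfold diag_height; destruct (anti d); ring. Qed.

(* In the scaled coordinates [2^k * frac] the cell [(j1, j2)] is the unit square with corner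
   [(j1, j2)], so the sign of the height on it is read off from [j1] and [j2]. *)
Lemma scaled_height_sign_weak d k j1 j2 c1 c2 :
  INR j1 <= c1 <= INR j1 + 1 -> INR j2 <= c2 <= INR j2 + 1 ->
  let h := if anti d then c1 + c2 - 2 ^ k else c2 - c1 in
  (above_diag d k j1 j2 -> 0 <= h) /\ (below_diag d k j1 j2 -> h <= 0).
Proof.
  intros B1 B2 h. unfold h, above_diag, below_diag.
  destruct (anti d); split; intro Hs.
  - assert (X : (2 ^ k <= j1 + j2)%nat) by lia. apply le_INR in X. rewrite INR_pow2, plus_INR in X. lra.
  - assert (X : (j1 + j2 + 2 <= 2 ^ k)%nat) by lia. apply le_INR in X.
    rewrite INR_pow2, !plus_INR in X. simpl INR in X. lra.
  - assert (X : (S j1 <= j2)%nat) by lia. apply le_INR in X. rewrite S_INR in X. lra.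
  - assert (X : (S j2 <= j1)%nat) by lia. apply le_INR in X. rewrite S_INR in X. lra.
Qed.

Lemma scaled_height_sign_strict d k j1 j2 c1 c2 :
  INR j1 < c1 < INR j1 + 1 -> INR j2 < c2 < INR j2 + 1 ->
  let h := if anti d then c1 + c2 - 2 ^ k else c2 - c1 in
  (above_diag d k j1 j2 -> 0 < h) /\ (below_diag d k j1 j2 -> h < 0).
Proof.
  intros B1 B2 h. unfold h, above_diag, below_diag.
  destruct (anti d); split; intro Hs.
  - assert (X : (2 ^ k <= j1 + j2)%nat) by lia. apply le_INR in X. rewrite INR_pow2, plus_INR in X. lra.
  - assert (X : (j1 + j2 + 2 <= 2 ^ k)%nat) by lia. apply le_INR in X.
    rewrite INR_pow2, !plus_INR in X. simpl INR in X. lra.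
  - assert (X : (S j1 <= j2)%nat) by lia. apply le_INR in X. rewrite S_INR in X. lra.
  - assert (X : (S j2 <= j1)%nat) by lia. apply le_INR in X. rewrite S_INR in X. lra.
Qed.

Definition InClosedRect (r : rect) (p : R * R) : Prop :=
  r_l1 r <= fst p <= r_u1 r /\ r_l2 r <= snd p <= r_u2 r.

Lemma diag_height_sign_closed d k j1 j2 p : dl1 d < du1 d -> dl2 d < du2 d ->
  InClosedRect (cell d k j1 j2) p ->
  (above_diag d k j1 j2 -> 0 <= diag_height d p) /\ (below_diag d k j1 j2 -> diag_height d p <= 0).
Proof.
  intros H1 H2 [[A1 A2] [A3 A4]]; unfold cell in *; cbn [r_l1 r_u1 r_l2 r_u2] in *.
  pose proof (scaled_frac_spec _ _ k (fst p) H1) as E1.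
  pose proof (scaled_frac_spec _ _ k (snd p) H2) as E2.
  pose proof (cell_width_pos _ _ k H1). pose proof (cell_width_pos _ _ k H2).
  rewrite S_INR in *.
  destruct (scaled_height_sign_weak d k j1 j2 (2 ^ k * frac (dl1 d) (du1 d) (fst p))
              (2 ^ k * frac (dl2 d) (du2 d) (snd p))) as [Ha Hb]; [split; nra .. |].
  rewrite <- scaled_diag_height in Ha, Hb. pose proof (pow_lt 2 k ltac:(lra)).
  split; intro Hs; [apply Ha in Hs | apply Hb in Hs]; nra.
Qed.

Lemma diag_height_sign_open d k j1 j2 p : dl1 d < du1 d -> dl2 d < du2 d ->
  InInterior (cell d k j1 j2) p ->
  (above_diag d k j1 j2 -> 0 < diag_height d p) /\ (below_diag d k j1 j2 -> diag_height d p < 0).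
Proof.
  intros H1 H2 [[A1 A2] [A3 A4]]; unfold cell in *; cbn [r_l1 r_u1 r_l2 r_u2] in *.
  pose proof (scaled_frac_spec _ _ k (fst p) H1) as E1.
  pose proof (scaled_frac_spec _ _ k (snd p) H2) as E2.
  pose proof (cell_width_pos _ _ k H1). pose proof (cell_width_pos _ _ k H2).
  rewrite S_INR in *.
  destruct (scaled_height_sign_strict d k j1 j2 (2 ^ k * frac (dl1 d) (du1 d) (fst p))
              (2 ^ k * frac (dl2 d) (du2 d) (snd p))) as [Ha Hb]; [split; nra .. |].
  rewrite <- scaled_diag_height in Ha, Hb. pose proof (pow_lt 2 k ltac:(lra)).
  split; intro Hs; [apply Ha in Hs | apply Hb in Hs]; nra.
Qed.

Lemma cell_interior_in_diag_rect d k j1 j2 p : dl1 d < du1 d -> dl2 d < du2 d ->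
  (j1 < 2 ^ k)%nat -> (j2 < 2 ^ k)%nat -> InInterior (cell d k j1 j2) p -> in_diag_rect d p.
Proof.
  intros H1 H2 J1 J2 [[A1 A2] [A3 A4]]; unfold cell in *; cbn [r_l1 r_u1 r_l2 r_u2] in *.
  split.
  - apply (cell_sub_interval _ _ k j1); auto; lra.
  - assert (dl2 d <= snd p <= du2 d) by (apply (cell_sub_interval _ _ k j2); auto; lra).
    pose proof (cell_width_pos _ _ k H2).
    assert (0 <= INR j2) by apply pos_INR.
    assert (INR (S j2) <= 2 ^ k) by (rewrite <- INR_pow2; apply le_INR; lia).
    assert (2 ^ k * cell_width (dl2 d) (du2 d) k = du2 d - dl2 d)
      by (unfold cell_width; field; apply pow_nonzero; lra).
    split; nra.
Qed.

Definition center (r : rect) : R * R := ((r_l1 r + r_u1 r) / 2, (r_l2 r + r_u2 r) / 2).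

Lemma center_interior d k j1 j2 : dl1 d < du1 d -> dl2 d < du2 d ->
  InInterior (cell d k j1 j2) (center (cell d k j1 j2)).
Proof.
  intros H1 H2. pose proof (cell_width_pos _ _ k H1). pose proof (cell_width_pos _ _ k H2).
  unfold InInterior, center, cell; cbn [fst snd r_l1 r_u1 r_l2 r_u2]. rewrite !S_INR. lra.
Qed.

Lemma center_height d k j1 j2 : dl1 d < du1 d -> dl2 d < du2 d ->
  on_diag d k j1 j2 -> diag_height d (center (cell d k j1 j2)) = 0.
Proof.
  intros H1 H2 O. pose proof (pow_lt 2 k ltac:(lra)).
  apply (Rmult_eq_reg_l (2 ^ k)); [|lra]. rewrite scaled_diag_height, Rmult_0_r.
  unfold center, cell, frac, cell_width; cbn [fst snd r_l1 r_u1 r_l2 r_u2].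
  unfold on_diag in O. destruct (anti d).
  - apply (f_equal INR) in O. rewrite INR_pow2, !plus_INR in O. rewrite <- O, !S_INR. simpl INR.
    pose proof (pos_INR j1). pose proof (pos_INR j2).
    field; repeat split; lra.
  - subst. rewrite !S_INR. field; repeat split; try lra; apply pow_nonzero; lra.
Qed.

Lemma cell_ErrFree_iff a b d k j1 j2 : diag_rect_ok a b d -> (j1 < 2 ^ k)%nat -> (j2 < 2 ^ k)%nat ->
  (ErrFree a b (cell d k j1 j2) <-> ~ on_diag d k j1 j2).
Proof.
  intros [H1 [H2 HR]] J1 J2.
  pose proof (fun p => cell_interior_in_diag_rect d k j1 j2 p H1 H2 J1 J2) as Hin. split.
  - intros E O. apply E. exists (center (cell d k j1 j2)).
    split; [apply center_interior; auto|].
    apply (HR _ (Hin _ (center_interior d k j1 j2 H1 H2))), center_height; auto.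
  - intro NO. destruct (diag_cases d k j1 j2) as [O|[P|N]]; [tauto| |].
    + apply (ErrFree_of_UniqueNearest a b _ (pos1 d) (pos2 d)). intros p Hp.
      apply (HR _ (Hin _ Hp)), (diag_height_sign_open d k j1 j2 p H1 H2 Hp); auto.
    + apply (ErrFree_of_UniqueNearest a b _ (neg1 d) (neg2 d)). intros p Hp.
      apply (HR _ (Hin _ Hp)), (diag_height_sign_open d k j1 j2 p H1 H2 Hp); auto.
Qed.

Lemma cell_decides a b d k j1 j2 p : diag_rect_ok a b d -> (j1 < 2 ^ k)%nat -> (j2 < 2 ^ k)%nat ->
  ~ on_diag d k j1 j2 -> InClosedRect (cell d k j1 j2) p -> dl2 d < snd p < du2 d ->
  diag_height d p <> 0 ->
  exists u1 u2, UniqueNearest a b p u1 u2 /\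
    forall q, InInterior (cell d k j1 j2) q -> UniqueNearest a b q u1 u2.
Proof.
  intros [H1 [H2 HR]] J1 J2 NO Hc Hp2 Hd.
  pose proof (fun p => cell_interior_in_diag_rect d k j1 j2 p H1 H2 J1 J2) as Hin.
  assert (Rp : in_diag_rect d p).
  { split; auto. destruct Hc as [[A1 A2] _]. unfold cell in *; cbn [r_l1 r_u1] in *.
    apply (cell_sub_interval _ _ k j1); auto. }
  pose proof (diag_height_sign_closed d k j1 j2 p H1 H2 Hc) as [Sa Sb].
  destruct (diag_cases d k j1 j2) as [O|[P|N]]; [tauto| |].
  - exists (pos1 d), (pos2 d). split.
    + apply (HR _ Rp). specialize (Sa P). lra.
    + intros q Hq. apply (HR _ (Hin _ Hq)), (diag_height_sign_open d k j1 j2 q H1 H2 Hq); auto.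
  - exists (neg1 d), (neg2 d). split.
    + apply (HR _ Rp). specialize (Sb N). lra.
    + intros q Hq. apply (HR _ (Hin _ Hq)), (diag_height_sign_open d k j1 j2 q H1 H2 Hq); auto.
Qed.

(** * The round-1 rectangles *)

Lemma b_mul_tau1 a b : 0 < b -> b * tau1 a b = (b * b - a * (1 - a)) / 2.
Proof. intro; unfold tau1; field; lra. Qed.

Lemma tau1_bounds a b : lattice_params a b -> 0 < tau1 a b < b / 2.
Proof.
  intros [[Ha1 Ha2] [Hb Hab]]. pose proof (b_mul_tau1 a b Hb).
  assert (a * (1 - a) < b * b) by nra. assert (0 < a * (1 - a)) by nra.
  split; apply (Rmult_lt_reg_l b); auto; lra.
Qed.

Lemma diag_rect_coords d p : dl1 d < du1 d -> dl2 d < du2 d -> in_diag_rect d p ->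
  let T1 := frac (dl1 d) (du1 d) (fst p) in let T2 := frac (dl2 d) (du2 d) (snd p) in
  0 <= T1 <= 1 /\ 0 < T2 < 1 /\
  fst p = dl1 d + T1 * (du1 d - dl1 d) /\ snd p = dl2 d + T2 * (du2 d - dl2 d).
Proof.
  intros H1 H2 [[A1 A2] [A3 A4]] T1 T2. unfold T1, T2, frac.
  repeat split; try (field; lra).
  - apply Rmult_le_pos; [lra | apply Rlt_le, Rinv_0_lt_compat; lra].
  - apply (Rmult_le_reg_r (du1 d - dl1 d)); [lra|]. unfold Rdiv; rewrite Rmult_assoc, Rinv_l; lra.
  - apply Rmult_lt_0_compat; [lra | apply Rinv_0_lt_compat; lra].
  - apply (Rmult_lt_reg_r (du2 d - dl2 d)); [lra|]. unfold Rdiv; rewrite Rmult_assoc, Rinv_l; lra.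
Qed.

(* The four round-1 rectangles crossed by an edge of the Voronoi cell (W2 <> 0 and W1 <> 0). *)
Definition drect_NE (a b : R) := mkDiagRect (a / 2) (/ 2) (tau1 a b) (b / 2) true 0 0 0 1.
Definition drect_NW (a b : R) := mkDiagRect (- / 2) ((a - 1) / 2) (tau1 a b) (b / 2) false 0 0 (-1) 1.
Definition drect_SW (a b : R) := mkDiagRect (- / 2) (- (a / 2)) (- b / 2) (- tau1 a b) true 0 (-1) 0 0.
Definition drect_SE (a b : R) :=
  mkDiagRect (- ((a - 1) / 2)) (- - / 2) (- b / 2) (- tau1 a b) false 1 (-1) 0 0.

Ltac params_facts H a b :=
  pose proof H as [[Ha1 Ha2] [Hb Hab]];
  let Ht := fresh "Ht" in pose proof (tau1_bounds _ _ H) as Ht;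
  let HB := fresh "HB" in pose proof (b_mul_tau1 a b Hb) as HB;
  assert (3 / 4 < b * b) by nra; assert (0 < a * (1 - a)) by nra; assert (a * (1 - a) < b * b) by nra.

(* After expressing the point through its relative coordinates [T1], [T2], all three claims of
   [diag_rect_ok] are polynomial inequalities in [a], [b], [T1], [T2]; [w] is the lattice point
   across the edge. *)
Ltac solve_diag_halves X Y w1 w2 :=
  split; [|split]; intro;
  [ apply UniqueNearest_of_hex_strict; auto; rewrite Y, X; unfold hex_strict; repeat split; nra
  | apply UniqueNearest_of_hex_strict; auto; rewrite Y, X; unfold hex_strict; repeat split; nra
  | apply (BdV0_of_equidistant _ _ _ w1 w2); auto;
    [ rewrite Y, X; unfold hex_weak; repeat split; nra | unfold slack; rewrite Y, X; nra | discriminate ] ].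

Lemma drect_NE_ok a b : lattice_params a b -> diag_rect_ok a b (drect_NE a b).
Proof.
  intro H. params_facts H a b.
  assert (B1 : dl1 (drect_NE a b) < du1 (drect_NE a b)) by (cbn; lra).
  assert (B2 : dl2 (drect_NE a b) < du2 (drect_NE a b)) by (cbn; lra).
  do 2 (split; auto). intros p Hp.
  destruct (diag_rect_coords _ p B1 B2 Hp) as (T1r & T2r & E1 & E2).
  unfold diag_height, drect_NE in *; cbn [anti dl1 du1 dl2 du2 neg1 neg2 pos1 pos2] in *.
  set (T1 := frac (a / 2) (/ 2) (fst p)) in *. set (T2 := frac (tau1 a b) (b / 2) (snd p)) in *.
  assert (Y : b * snd p = (b * b - a * (1 - a)) / 2 + T2 * (a * (1 - a) / 2)).
  { rewrite E2. transitivity (b * tau1 a b + T2 * (b * b / 2 - b * tau1 a b)); [field|].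
    rewrite HB. field. }
  assert (X : fst p = a / 2 + T1 * ((1 - a) / 2)) by (rewrite E1; field).
  clearbody T1 T2. clear E1 E2.
  solve_diag_halves X Y 0%Z 1%Z.
Qed.

Lemma drect_NW_ok a b : lattice_params a b -> diag_rect_ok a b (drect_NW a b).
Proof.
  intro H. params_facts H a b.
  assert (B1 : dl1 (drect_NW a b) < du1 (drect_NW a b)) by (cbn; lra).
  assert (B2 : dl2 (drect_NW a b) < du2 (drect_NW a b)) by (cbn; lra).
  do 2 (split; auto). intros p Hp.
  destruct (diag_rect_coords _ p B1 B2 Hp) as (T1r & T2r & E1 & E2).
  unfold diag_height, drect_NW in *; cbn [anti dl1 du1 dl2 du2 neg1 neg2 pos1 pos2] in *.
  set (T1 := frac (- / 2) ((a - 1) / 2) (fst p)) in *. set (T2 := frac (tau1 a b) (b / 2) (snd p)) in *.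
  assert (Y : b * snd p = (b * b - a * (1 - a)) / 2 + T2 * (a * (1 - a) / 2)).
  { rewrite E2. transitivity (b * tau1 a b + T2 * (b * b / 2 - b * tau1 a b)); [field|].
    rewrite HB. field. }
  assert (X : fst p = - / 2 + T1 * (a / 2)) by (rewrite E1; field).
  clearbody T1 T2. clear E1 E2.
  solve_diag_halves X Y (-1)%Z 1%Z.
Qed.

Lemma drect_SW_ok a b : lattice_params a b -> diag_rect_ok a b (drect_SW a b).
Proof.
  intro H. params_facts H a b.
  assert (B1 : dl1 (drect_SW a b) < du1 (drect_SW a b)) by (cbn; lra).
  assert (B2 : dl2 (drect_SW a b) < du2 (drect_SW a b)) by (cbn; lra).
  do 2 (split; auto). intros p Hp.
  destruct (diag_rect_coords _ p B1 B2 Hp) as (T1r & T2r & E1 & E2).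
  unfold diag_height, drect_SW in *; cbn [anti dl1 du1 dl2 du2 neg1 neg2 pos1 pos2] in *.
  set (T1 := frac (- / 2) (- (a / 2)) (fst p)) in *. set (T2 := frac (- b / 2) (- tau1 a b) (snd p)) in *.
  assert (Y : b * snd p = - (b * b) / 2 + T2 * (a * (1 - a) / 2)).
  { rewrite E2. transitivity (- (b * b) / 2 + T2 * (b * b / 2 - b * tau1 a b)); [field|].
    rewrite HB. field. }
  assert (X : fst p = - / 2 + T1 * ((1 - a) / 2)) by (rewrite E1; field).
  clearbody T1 T2. clear E1 E2.
  solve_diag_halves X Y 0%Z (-1)%Z.
Qed.

Lemma drect_SE_ok a b : lattice_params a b -> diag_rect_ok a b (drect_SE a b).
Proof.
  intro H. params_facts H a b.
  assert (B1 : dl1 (drect_SE a b) < du1 (drect_SE a b)) by (cbn; lra).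
  assert (B2 : dl2 (drect_SE a b) < du2 (drect_SE a b)) by (cbn; lra).
  do 2 (split; auto). intros p Hp.
  destruct (diag_rect_coords _ p B1 B2 Hp) as (T1r & T2r & E1 & E2).
  unfold diag_height, drect_SE in *; cbn [anti dl1 du1 dl2 du2 neg1 neg2 pos1 pos2] in *.
  set (T1 := frac (- ((a - 1) / 2)) (- - / 2) (fst p)) in *.
  set (T2 := frac (- b / 2) (- tau1 a b) (snd p)) in *.
  assert (Y : b * snd p = - (b * b) / 2 + T2 * (a * (1 - a) / 2)).
  { rewrite E2. transitivity (- (b * b) / 2 + T2 * (b * b / 2 - b * tau1 a b)); [field|].
    rewrite HB. field. }
  assert (X : fst p = (1 - a) / 2 + T1 * (a / 2)) by (rewrite E1; field).
  clearbody T1 T2. clear E1 E2.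
  solve_diag_halves X Y 1%Z (-1)%Z.
Qed.

Lemma W2_top a b x2 : 0 < tau1 a b -> tau1 a b < x2 -> W2 a b x2 = 1%Z.
Proof. intros; unfold W2; do 2 (destruct (Rle_dec _ _); [lra|]); auto. Qed.
Lemma W2_mid a b x2 : - tau1 a b < x2 <= tau1 a b -> W2 a b x2 = 0%Z.
Proof. intros; unfold W2; destruct (Rle_dec _ _); [lra|]; destruct (Rle_dec _ _); [auto | lra]. Qed.
Lemma W2_bot a b x2 : x2 <= - tau1 a b -> W2 a b x2 = (-1)%Z.
Proof. intros; unfold W2; destruct (Rle_dec _ _); [auto | lra]. Qed.

Lemma Iidx_m1 a s : s <= (a - 1) / 2 -> Iidx a s = (-1)%Z.
Proof. intros; unfold Iidx; destruct (Rle_dec _ _); [auto | lra]. Qed.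
Lemma Iidx_0 a s : (a - 1) / 2 < s <= a / 2 -> Iidx a s = 0%Z.
Proof. intros; unfold Iidx; destruct (Rle_dec _ _); [lra|]; destruct (Rle_dec _ _); [auto | lra]. Qed.
Lemma Iidx_1 a s : 0 < a -> a / 2 < s -> Iidx a s = 1%Z.
Proof. intros; unfold Iidx; do 2 (destruct (Rle_dec _ _); [lra|]); auto. Qed.

Lemma Iidx_cases a s : 0 < a ->
  (Iidx a s = (-1)%Z /\ s <= (a - 1) / 2) \/ (Iidx a s = 0%Z /\ (a - 1) / 2 < s <= a / 2) \/
  (Iidx a s = 1%Z /\ a / 2 < s).
Proof.
  intros. destruct (Rle_dec s ((a - 1) / 2)); [left; auto using Iidx_m1|].
  destruct (Rle_dec s (a / 2)); [right; left; split; [apply Iidx_0|]; lra|].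
  right; right; split; [apply Iidx_1|]; lra.
Qed.

Definition drect_box (d : diag_rect) : rect := mkRect (dl1 d) (du1 d) (dl2 d) (du2 d).

Definition refines (a b : R) (d : diag_rect) (x : R * R) : Prop :=
  forall k, rectn a b x k =
    cell d k (cell_index (dl1 d) (du1 d) (fst x) k) (cell_index (dl2 d) (du2 d) (snd x) k).

Lemma refines_of_rect1 a b d x : rect1 a b x = drect_box d -> refines a b d x.
Proof. intros E k. rewrite rectn_cells; cbn zeta. rewrite E. reflexivity. Qed.

Ltac rect1_tac := intros; unfold rect1, W1; cbn [fst snd];
  rewrite ?W2_top, ?W2_mid, ?W2_bot by (auto; lra); cbv [Z.eqb Pos.eqb];
  rewrite ?Iidx_m1, ?Iidx_0, ?Iidx_1 by (auto; lra); reflexivity.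

Lemma rect1_NE a b x1 x2 : lattice_params a b -> tau1 a b < x2 -> a / 2 < x1 ->
  rect1 a b (x1, x2) = drect_box (drect_NE a b).
Proof. intros H; pose proof (tau1_bounds a b H); destruct H as [[] _]; rect1_tac. Qed.
Lemma rect1_NW a b x1 x2 : lattice_params a b -> tau1 a b < x2 -> x1 <= (a - 1) / 2 ->
  rect1 a b (x1, x2) = drect_box (drect_NW a b).
Proof. intros H; pose proof (tau1_bounds a b H); rect1_tac. Qed.
Lemma rect1_SW a b x1 x2 : lattice_params a b -> x2 <= - tau1 a b -> a / 2 < - x1 ->
  rect1 a b (x1, x2) = drect_box (drect_SW a b).
Proof. intros H; destruct H as [[] _]; rect1_tac. Qed.
Lemma rect1_SE a b x1 x2 : x2 <= - tau1 a b -> - x1 <= (a - 1) / 2 ->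
  rect1 a b (x1, x2) = drect_box (drect_SE a b).
Proof. rect1_tac. Qed.
Lemma rect1_mid a b x1 x2 : - tau1 a b < x2 <= tau1 a b ->
  rect1 a b (x1, x2) = mkRect (- / 2) (/ 2) (- tau1 a b) (tau1 a b).
Proof. rect1_tac. Qed.
Lemma rect1_N0 a b x1 x2 : lattice_params a b -> tau1 a b < x2 -> (a - 1) / 2 < x1 <= a / 2 ->
  rect1 a b (x1, x2) = mkRect ((a - 1) / 2) (a / 2) (tau1 a b) (b / 2).
Proof. intros H; pose proof (tau1_bounds a b H); rect1_tac. Qed.
Lemma rect1_S0 a b x1 x2 : x2 <= - tau1 a b -> (a - 1) / 2 < - x1 <= a / 2 ->
  rect1 a b (x1, x2) = mkRect (- (a / 2)) (- ((a - 1) / 2)) (- b / 2) (- tau1 a b).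
Proof. rect1_tac. Qed.

Lemma UniqueNearest_mid a b p : lattice_params a b ->
  - / 2 < fst p < / 2 -> - tau1 a b < snd p < tau1 a b -> UniqueNearest a b p 0 0.
Proof.
  intros H H1 H2. params_facts H a b. apply UniqueNearest_of_hex_strict; auto.
  assert (b * snd p < (b * b - a * (1 - a)) / 2) by (rewrite <- HB; apply Rmult_lt_compat_l; lra).
  assert (- ((b * b - a * (1 - a)) / 2) < b * snd p) by (rewrite <- HB; nra).
  unfold hex_strict; simpl IZR; repeat split; nra.
Qed.

Lemma UniqueNearest_N0 a b p : lattice_params a b ->
  (a - 1) / 2 <= fst p <= a / 2 -> tau1 a b < snd p < b / 2 -> UniqueNearest a b p 0 0.
Proof.
  intros H H1 H2. params_facts H a b. apply UniqueNearest_of_hex_strict; auto.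
  assert ((b * b - a * (1 - a)) / 2 < b * snd p) by (rewrite <- HB; apply Rmult_lt_compat_l; lra).
  assert (b * snd p < b * b / 2) by nra.
  unfold hex_strict; simpl IZR; repeat split; nra.
Qed.

Lemma UniqueNearest_S0 a b p : lattice_params a b ->
  - (a / 2) <= fst p <= - ((a - 1) / 2) -> - b / 2 < snd p < - tau1 a b -> UniqueNearest a b p 0 0.
Proof.
  intros H H1 H2. params_facts H a b. apply UniqueNearest_of_hex_strict; auto.
  assert (b * snd p < - ((b * b - a * (1 - a)) / 2)) by (rewrite <- HB; nra).
  assert (- (b * b / 2) < b * snd p) by nra.
  unfold hex_strict; simpl IZR; repeat split; nra.
Qed.

Lemma ErrFree_mid a b : lattice_params a b -> ErrFree a b (mkRect (- / 2) (/ 2) (- tau1 a b) (tau1 a b)).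
Proof. intro H. apply (ErrFree_of_UniqueNearest a b _ 0 0). intros p [[] []]. apply UniqueNearest_mid; auto. Qed.

Lemma ErrFree_N0 a b : lattice_params a b -> ErrFree a b (mkRect ((a - 1) / 2) (a / 2) (tau1 a b) (b / 2)).
Proof.
  intro H. apply (ErrFree_of_UniqueNearest a b _ 0 0). intros p [[] []].
  apply UniqueNearest_N0; auto; cbn in *; lra.
Qed.

Lemma ErrFree_S0 a b : lattice_params a b ->
  ErrFree a b (mkRect (- (a / 2)) (- ((a - 1) / 2)) (- b / 2) (- tau1 a b)).
Proof.
  intro H. apply (ErrFree_of_UniqueNearest a b _ 0 0). intros p [[] []].
  apply UniqueNearest_S0; auto; cbn in *; lra.
Qed.

(** * Integrals of piecewise constant functions *)

Lemma scal_R (x y : R) : scal x y = x * y.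
Proof. reflexivity. Qed.
Lemma plus_R (x y : R) : plus x y = x + y.
Proof. reflexivity. Qed.

Lemma is_RInt_ext_open (f g : R -> R) L U l : L <= U -> (forall x, L < x < U -> f x = g x) ->
  is_RInt f L U l -> is_RInt g L U l.
Proof. intros HLU E. apply is_RInt_ext. rewrite Rmin_left, Rmax_right by lra. auto. Qed.

Lemma is_RInt_const_open (f : R -> R) L U c : L <= U -> (forall x, L < x < U -> f x = c) ->
  is_RInt f L U ((U - L) * c).
Proof.
  intros HLU E. apply (is_RInt_ext_open (fun _ => c)); auto.
  - intros; symmetry; auto.
  - rewrite <- scal_R. exact (@is_RInt_const R_NormedModule L U c).
Qed.

Lemma is_RInt_zero_open (f : R -> R) L U : L <= U -> (forall x, L < x < U -> f x = 0) ->
  is_RInt f L U 0.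
Proof. intros. replace 0 with ((U - L) * 0) by ring. apply is_RInt_const_open; auto. Qed.

Lemma is_RInt_Chasles_R (f : R -> R) a b c l1 l2 :
  is_RInt f a b l1 -> is_RInt f b c l2 -> is_RInt f a c (l1 + l2).
Proof. rewrite <- plus_R. apply (@is_RInt_Chasles R_NormedModule). Qed.

Lemma is_RInt_zero_but_one (f : R -> R) L U y : L <= U ->
  (forall x, L < x < U -> x <> y -> f x = 0) -> is_RInt f L U 0.
Proof.
  intros HLU E.
  destruct (Rlt_dec L y); [destruct (Rlt_dec y U)|].
  - replace 0 with (0 + 0) by ring. apply (is_RInt_Chasles_R _ _ y);
      apply is_RInt_zero_open; try lra; intros; apply E; lra.
  - apply is_RInt_zero_open; auto. intros; apply E; lra.
  - apply is_RInt_zero_open; auto. intros; apply E; lra.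
Qed.

Lemma is_RInt_zero_cells (f : R -> R) L h M : 0 < h ->
  (forall m s, (m < M)%nat -> L + INR m * h < s < L + INR (S m) * h -> f s = 0) ->
  is_RInt f L (L + INR M * h) 0.
Proof.
  intros Hh. induction M as [|M IH]; intros Hf.
  - replace (L + INR 0 * h) with L by (simpl; ring). apply is_RInt_zero_open; intros; lra.
  - replace 0 with (0 + 0) by ring. apply (is_RInt_Chasles_R _ _ (L + INR M * h)).
    + apply IH. intros; apply (Hf m); auto.
    + apply is_RInt_zero_open; [rewrite S_INR; lra|]. intros; apply (Hf M); auto.
Qed.

Lemma is_RInt_single_cell (f : R -> R) L h M m0 c : 0 < h -> (m0 < M)%nat ->
  (forall m s, (m < M)%nat -> L + INR m * h < s < L + INR (S m) * h ->
     f s = if Nat.eq_dec m m0 then c else 0) ->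
  is_RInt f L (L + INR M * h) (h * c).
Proof.
  intros Hh Hm0 Hf.
  replace (h * c) with (0 + (L + INR (S m0) * h - (L + INR m0 * h)) * c + 0)
    by (rewrite S_INR; ring).
  apply (is_RInt_Chasles_R _ _ (L + INR (S m0) * h)); [apply (is_RInt_Chasles_R _ _ (L + INR m0 * h))|].
  - apply is_RInt_zero_cells; auto. intros m s Hm Hs.
    rewrite (Hf m s) by (lia || exact Hs). destruct (Nat.eq_dec m m0); [lia | reflexivity].
  - apply is_RInt_const_open; [rewrite S_INR; lra|]. intros s Hs.
    rewrite (Hf m0 s) by auto. destruct (Nat.eq_dec m0 m0); [reflexivity | lia].
  - replace (L + INR M * h) with ((L + INR (S m0) * h) + INR (M - S m0) * h)
      by (rewrite minus_INR by lia; ring).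
    apply is_RInt_zero_cells; auto. intros m s Hm Hs.
    rewrite (Hf (S m0 + m)%nat s) by (lia || (rewrite !S_INR, plus_INR, !S_INR in *; lra)).
    destruct (Nat.eq_dec _ m0); [lia | reflexivity].
Qed.

Lemma RInt_is_of_is_RInt (f : R -> R) a b v : is_RInt f a b v -> RInt_is f a b v.
Proof.
  intro H. assert (E : ex_RInt f a b) by (exists v; auto).
  exists (ex_RInt_Reals_0 f a b E). rewrite <- RInt_Reals. apply is_RInt_unique; auto.
Qed.

Lemma is_RInt_scal_open (f g : R -> R) L U v c : L <= U -> is_RInt f L U v ->
  (forall x, L < x < U -> g x = c * f x) -> is_RInt g L U (c * v).
Proof.
  intros HLU Hf E. rewrite <- scal_R. apply (is_RInt_ext_open (fun y => scal c (f y))); auto.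
  - intros. rewrite E by auto. reflexivity.
  - exact (@is_RInt_scal R_NormedModule f L U c v Hf).
Qed.

(* Slices at the two endpoints [x1 = +-1/2] only need to be integrable. *)
Lemma Int2_is_of_slices b (F : R -> R -> R) (h : R -> R) V :
  (forall x1, - / 2 <= x1 <= / 2 -> exists v, is_RInt (F x1) (- b / 2) (b / 2) v) ->
  (forall x1, - / 2 < x1 < / 2 -> is_RInt (F x1) (- b / 2) (b / 2) (h x1)) ->
  is_RInt h (- / 2) (/ 2) V -> Int2_is b F V.
Proof.
  intros Ex Ho Hh. exists (fun x1 => RInt (F x1) (- b / 2) (b / 2)). split.
  - intros x1 Hx. destruct (Ex x1 Hx) as [v Hv]. rewrite (is_RInt_unique _ _ _ _ Hv).
    apply RInt_is_of_is_RInt; auto.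
  - apply RInt_is_of_is_RInt, (is_RInt_ext_open h); [lra | | auto].
    intros x1 Hx. symmetry. apply is_RInt_unique. auto.
Qed.

Lemma indic_true (P : Prop) : P -> indic P = 1.
Proof. intro. unfold indic. destruct (excluded_middle_informative P); tauto. Qed.
Lemma indic_false (P : Prop) : ~ P -> indic P = 0.
Proof. intro. unfold indic. destruct (excluded_middle_informative P); tauto. Qed.

(** * Halting inside a cut rectangle *)

Lemma on_diag_dec d k j1 j2 : on_diag d k j1 j2 \/ ~ on_diag d k j1 j2.
Proof. unfold on_diag; destruct (anti d); lia. Qed.

Lemma on_diag_0 d : on_diag d 0 0 0.
Proof. unfold on_diag; destruct (anti d); simpl; lia. Qed.

Lemma on_diag_parent d i L1 U1 L2 U2 x1 x2 :
  on_diag d (S i) (cell_index L1 U1 x1 (S i)) (cell_index L2 U2 x2 (S i)) ->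
  on_diag d i (cell_index L1 U1 x1 i) (cell_index L2 U2 x2 i).
Proof.
  unfold on_diag.
  destruct (cell_index_S L1 U1 x1 i) as [E1|E1], (cell_index_S L2 U2 x2 i) as [E2|E2];
    rewrite E1, E2; destruct (anti d); simpl; lia.
Qed.

Lemma on_diag_ancestors d k L1 U1 L2 U2 x1 x2 :
  on_diag d k (cell_index L1 U1 x1 k) (cell_index L2 U2 x2 k) ->
  forall i, (i <= k)%nat -> on_diag d i (cell_index L1 U1 x1 i) (cell_index L2 U2 x2 i).
Proof.
  induction k; intros H i Hi.
  - replace i with 0%nat by lia. auto.
  - destruct (Nat.eq_dec i (S k)) as [->|]; auto.
    apply IHk; [apply on_diag_parent; auto | lia].
Qed.

Lemma HaltsAt_diag_iff a b d x k : diag_rect_ok a b d -> refines a b d x ->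
  HaltsAt a b x (S k) <->
  ~ on_diag d k (cell_index (dl1 d) (du1 d) (fst x) k) (cell_index (dl2 d) (du2 d) (snd x) k) /\
  forall i, (i < k)%nat ->
    on_diag d i (cell_index (dl1 d) (du1 d) (fst x) i) (cell_index (dl2 d) (du2 d) (snd x) i).
Proof.
  intros Hd HR. unfold HaltsAt. rewrite HR.
  rewrite (cell_ErrFree_iff a b d) by (auto; apply cell_index_lt).
  split; intros [A B]; split; auto; intros i Hi; specialize (B i Hi);
    rewrite HR, (cell_ErrFree_iff a b d) in * by (auto; apply cell_index_lt).
  - destruct (on_diag_dec d i (cell_index (dl1 d) (du1 d) (fst x) i)
                             (cell_index (dl2 d) (du2 d) (snd x) i)); tauto.
  - tauto.
Qed.

(* In the column [j1] at level [k+1], exactly one cell has a parent on the diagonal without being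
   on it. *)
Lemma on_diag_leaves_once d k j1' j1 : (j1 = 2 * j1' \/ j1 = S (2 * j1'))%nat -> (j1' < 2 ^ k)%nat ->
  exists m0, (m0 < 2 ^ S k)%nat /\
    forall m j2', (m = 2 * j2' \/ m = S (2 * j2'))%nat ->
      (on_diag d k j1' j2' /\ ~ on_diag d (S k) j1 m <-> m = m0).
Proof.
  intros HS Hb. unfold on_diag. destruct (anti d), HS as [-> | ->].
  - exists (2 * (2 ^ k - 1 - j1'))%nat. split; [simpl; lia|]. intros m j2' Hm; simpl; lia.
  - exists (S (2 * (2 ^ k - 1 - j1')))%nat. split; [simpl; lia|]. intros m j2' Hm; simpl; lia.
  - exists (S (2 * j1'))%nat. split; [simpl; lia|]. intros m j2' Hm; lia.
  - exists (2 * j1')%nat. split; [simpl; lia|]. intros m j2' Hm; lia.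
Qed.

Lemma slice_halts_diag a b d x1 n : diag_rect_ok a b d ->
  (forall x2, dl2 d < x2 < du2 d -> refines a b d (x1, x2)) -> (1 <= n)%nat ->
  is_RInt (fun x2 => indic (HaltsAt a b (x1, x2) n)) (dl2 d) (du2 d)
    (if (n =? 1)%nat then 0 else (du2 d - dl2 d) / 2 ^ (n - 1)).
Proof.
  intros Hd HR Hn. pose proof Hd as [H1 [H2 _]].
  destruct n as [|[|k]]; [lia | |].
  - apply is_RInt_zero_open; [lra|]. intros x2 Hx. apply indic_false.
    rewrite (HaltsAt_diag_iff a b d _ 0 Hd (HR x2 Hx)). intros [A _]. apply A, on_diag_0.
  - replace (S (S k) - 1)%nat with (S k) by lia. cbn [Nat.eqb].
    set (L1 := dl1 d) in *; set (U1 := du1 d) in *; set (L2 := dl2 d) in *; set (U2 := du2 d) in *.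
    destruct (on_diag_leaves_once d k (cell_index L1 U1 x1 k) (cell_index L1 U1 x1 (S k))
                (cell_index_S L1 U1 x1 k) (cell_index_lt L1 U1 x1 k)) as [m0 [Hm0 Hc]].
    assert (Hh := cell_width_pos L2 U2 (S k) H2).
    assert (E : U2 = L2 + INR (2 ^ S k) * cell_width L2 U2 (S k)).
    { rewrite INR_pow2. unfold cell_width. field. apply pow_nonzero; lra. }
    replace ((U2 - L2) / 2 ^ S k) with (cell_width L2 U2 (S k) * 1) by (unfold cell_width; ring).
    match goal with |- is_RInt ?f _ _ ?v =>
      enough (X : is_RInt f L2 (L2 + INR (2 ^ S k) * cell_width L2 U2 (S k)) v)
        by (rewrite <- E in X; exact X) end.
    apply (is_RInt_single_cell _ _ _ _ m0); auto.
    intros m s Hm Hs.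
    assert (Hs' : L2 < s < U2).
    { pose proof (cell_sub_interval L2 U2 (S k) m s H2 Hm ltac:(lra)).
      assert (0 <= INR m * cell_width L2 U2 (S k)) by (apply Rmult_le_pos; [apply pos_INR | lra]).
      assert (INR (S m) * cell_width L2 U2 (S k) <= INR (2 ^ S k) * cell_width L2 U2 (S k))
        by (apply Rmult_le_compat_r; [lra | apply le_INR; lia]).
      lra. }
    assert (Jm : cell_index L2 U2 s (S k) = m) by (apply cell_index_open; auto).
    specialize (Hc m (cell_index L2 U2 s k) ltac:(rewrite <- Jm; apply cell_index_S)).
    destruct (Nat.eq_dec m m0) as [e|ne]; [apply indic_true | apply indic_false];
      rewrite (HaltsAt_diag_iff a b d _ (S k) Hd (HR s Hs')); cbn [fst snd]; fold L1 U1 L2 U2;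
      rewrite Jm.
    + destruct (proj2 Hc e) as [A B]. split; auto. intros i Hi.
      apply (on_diag_ancestors d k L1 U1 L2 U2 x1 s A). lia.
    + intros [A B]. apply ne, Hc. split; auto.
Qed.

(* Where the slice at [x1] crosses the cut of [d]. *)
Definition diag_point (d : diag_rect) (x1 : R) : R :=
  if anti d then dl2 d + (1 - frac (dl1 d) (du1 d) x1) * (du2 d - dl2 d)
  else dl2 d + frac (dl1 d) (du1 d) x1 * (du2 d - dl2 d).

Lemma diag_height_zero d x1 x2 : dl2 d < du2 d -> diag_height d (x1, x2) = 0 -> x2 = diag_point d x1.
Proof.
  intros H2 E. unfold diag_height, diag_point in *. cbn [fst snd] in E.
  assert (X : x2 = dl2 d + frac (dl2 d) (du2 d) x2 * (du2 d - dl2 d)) by (unfold frac; field; lra).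
  destruct (anti d); rewrite X at 1; f_equal; f_equal; lra.
Qed.

Lemma slice_err_diag a b d x1 n : diag_rect_ok a b d -> dl1 d <= x1 <= du1 d ->
  (forall x2, dl2 d < x2 < du2 d -> refines a b d (x1, x2)) ->
  is_RInt (fun x2 => indic (HaltsAt a b (x1, x2) n /\ ~ CorrectAt a b (x1, x2) n)) (dl2 d) (du2 d) 0.
Proof.
  intros Hd Hx1 HR. pose proof Hd as [H1 [H2 _]].
  apply (is_RInt_zero_but_one _ _ _ (diag_point d x1)); [lra|]. intros x2 Hx2 Hy.
  apply indic_false. intros [Hh Hc]. apply Hc.
  destruct n as [|k]; [destruct Hh|].
  rewrite (HaltsAt_diag_iff a b d _ k Hd (HR x2 Hx2)) in Hh. destruct Hh as [Hoff _].
  cbn [fst snd] in Hoff.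
  assert (Hcl : InClosedRect (cell d k (cell_index (dl1 d) (du1 d) x1 k)
                                       (cell_index (dl2 d) (du2 d) x2 k)) (x1, x2)).
  { pose proof (cell_index_closed _ _ x1 k H1 Hx1).
    pose proof (cell_index_closed _ _ x2 k H2 ltac:(lra)).
    unfold InClosedRect, cell, cell_lo, cell_hi in *; auto. }
  destruct (cell_decides a b d k _ _ (x1, x2) Hd (cell_index_lt _ _ _ _) (cell_index_lt _ _ _ _) Hoff Hcl)
    as [u1 [u2 [A B]]]; [cbn; lra | intro E; apply Hy, diag_height_zero; auto |].
  exists u1, u2. split; auto. replace (S k - 1)%nat with k by lia. rewrite (HR x2 Hx2). auto.
Qed.

(** * Slices of the Babai cell *)

(* Length of [{x2 : N(x1, x2) = n}] within the top (or bottom) strip, given the round-1 index [w]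
   of [x1] (or [-x1]), resp. within the middle strip. *)
Definition side_slice (a b : R) (n : nat) (w : Z) : R :=
  if (w =? 0)%Z then (if (n =? 1)%nat then b / 2 - tau1 a b else 0)
  else (if (n =? 1)%nat then 0 else (b / 2 - tau1 a b) / 2 ^ (n - 1)).
Definition mid_slice (a b : R) (n : nat) : R := if (n =? 1)%nat then 2 * tau1 a b else 0.

Lemma side_slice_diag a b n w : (w <> 0)%Z ->
  side_slice a b n w = if (n =? 1)%nat then 0 else (b / 2 - tau1 a b) / 2 ^ (n - 1).
Proof. intros. unfold side_slice. destruct (w =? 0)%Z eqn:E; auto. apply Z.eqb_eq in E. lia. Qed.

Lemma side_slice_0 a b n : side_slice a b n 0 = (b / 2 - tau1 a b) * (if (n =? 1)%nat then 1 else 0).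
Proof. unfold side_slice. simpl. destruct (n =? 1)%nat; ring. Qed.

Lemma HaltsAt_ErrFree_iff a b x n : ErrFree a b (rect1 a b x) -> (HaltsAt a b x n <-> n = 1%nat).
Proof.
  intros F. destruct n as [|[|k]]; simpl.
  - split; [tauto | lia].
  - split; auto. intros _. split; auto. intros; lia.
  - split; [|lia]. intros [_ B]. exfalso. apply (B 0%nat); [lia | auto].
Qed.

Lemma slice_halts_ErrFree a b x1 L2 U2 R0 n : L2 <= U2 -> ErrFree a b R0 ->
  (forall x2, L2 < x2 < U2 -> rect1 a b (x1, x2) = R0) ->
  is_RInt (fun x2 => indic (HaltsAt a b (x1, x2) n)) L2 U2
    ((U2 - L2) * (if (n =? 1)%nat then 1 else 0)).
Proof.
  intros HLU F E. apply is_RInt_const_open; auto. intros x2 Hx.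
  rewrite <- (E x2 Hx) in F.
  destruct (Nat.eqb_spec n 1); [apply indic_true | apply indic_false];
    rewrite (HaltsAt_ErrFree_iff a b _ n F); auto.
Qed.

Lemma slice_err_ErrFree a b x1 L2 U2 R0 n : L2 <= U2 ->
  (forall x2, L2 < x2 < U2 -> rect1 a b (x1, x2) = R0) ->
  (forall x2, L2 < x2 < U2 -> UniqueNearest a b (x1, x2) 0 0) ->
  (forall p, InInterior R0 p -> UniqueNearest a b p 0 0) ->
  is_RInt (fun x2 => indic (HaltsAt a b (x1, x2) n /\ ~ CorrectAt a b (x1, x2) n)) L2 U2 0.
Proof.
  intros HLU E U I. apply is_RInt_zero_open; auto. intros x2 Hx. apply indic_false. intros [Hh Hc].
  assert (F : ErrFree a b (rect1 a b (x1, x2))) by (rewrite E by auto; exact (ErrFree_of_UniqueNearest _ _ _ _ _ I)).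
  rewrite (HaltsAt_ErrFree_iff a b _ n F) in Hh. subst n.
  apply Hc. exists 0%Z, 0%Z. split; auto. simpl. rewrite E by auto. auto.
Qed.

Ltac strip_bounds Hx2 := cbn [dl2 du2 drect_NE drect_NW drect_SW drect_SE] in Hx2; lra.

Lemma slice_halts_top a b x1 n : lattice_params a b -> (1 <= n)%nat ->
  is_RInt (fun x2 => indic (HaltsAt a b (x1, x2) n)) (tau1 a b) (b / 2) (side_slice a b n (Iidx a x1)).
Proof.
  intros H Hn. pose proof H as [[Ha1 Ha2] [Hb Hab]]. pose proof (tau1_bounds a b H).
  destruct (Iidx_cases a x1 Ha1) as [[E C]|[[E C]|[E C]]]; rewrite E.
  - rewrite side_slice_diag by lia.
    apply (slice_halts_diag a b (drect_NW a b) x1 n (drect_NW_ok a b H)); auto.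
    intros x2 Hx2. apply refines_of_rect1, rect1_NW; auto; strip_bounds Hx2.
  - rewrite side_slice_0. apply (slice_halts_ErrFree a b x1 (tau1 a b) (b / 2) _ n ltac:(lra) (ErrFree_N0 a b H)).
    intros x2 Hx2. apply rect1_N0; auto; lra.
  - rewrite side_slice_diag by lia.
    apply (slice_halts_diag a b (drect_NE a b) x1 n (drect_NE_ok a b H)); auto.
    intros x2 Hx2. apply refines_of_rect1, rect1_NE; auto; strip_bounds Hx2.
Qed.

Lemma slice_halts_bot a b x1 n : lattice_params a b -> (1 <= n)%nat ->
  is_RInt (fun x2 => indic (HaltsAt a b (x1, x2) n)) (- b / 2) (- tau1 a b)
    (side_slice a b n (Iidx a (- x1))).
Proof.
  intros H Hn. pose proof H as [[Ha1 Ha2] [Hb Hab]]. pose proof (tau1_bounds a b H).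
  destruct (Iidx_cases a (- x1) Ha1) as [[E C]|[[E C]|[E C]]]; rewrite E.
  - rewrite side_slice_diag by lia.
    replace (b / 2 - tau1 a b) with (du2 (drect_SE a b) - dl2 (drect_SE a b)) by (cbn; field).
    apply (slice_halts_diag a b (drect_SE a b) x1 n (drect_SE_ok a b H)); auto.
    intros x2 Hx2. apply refines_of_rect1, rect1_SE; auto; strip_bounds Hx2.
  - rewrite side_slice_0. replace (b / 2 - tau1 a b) with (- tau1 a b - - b / 2) by field.
    apply (slice_halts_ErrFree a b x1 (- b / 2) (- tau1 a b) _ n ltac:(lra) (ErrFree_S0 a b H)).
    intros x2 Hx2. apply rect1_S0; auto; lra.
  - rewrite side_slice_diag by lia.
    replace (b / 2 - tau1 a b) with (du2 (drect_SW a b) - dl2 (drect_SW a b)) by (cbn; field).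
    apply (slice_halts_diag a b (drect_SW a b) x1 n (drect_SW_ok a b H)); auto.
    intros x2 Hx2. apply refines_of_rect1, rect1_SW; auto; strip_bounds Hx2.
Qed.

Lemma slice_halts_mid a b x1 n : lattice_params a b ->
  is_RInt (fun x2 => indic (HaltsAt a b (x1, x2) n)) (- tau1 a b) (tau1 a b) (mid_slice a b n).
Proof.
  intros H. pose proof (tau1_bounds a b H).
  replace (mid_slice a b n) with ((tau1 a b - - tau1 a b) * (if (n =? 1)%nat then 1 else 0))
    by (unfold mid_slice; destruct (n =? 1)%nat; ring).
  apply (slice_halts_ErrFree a b x1 (- tau1 a b) (tau1 a b) _ n ltac:(lra) (ErrFree_mid a b H)).
  intros x2 Hx2. apply rect1_mid; lra.
Qed.

Lemma slice_err_top a b x1 n : lattice_params a b -> - / 2 <= x1 <= / 2 ->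
  is_RInt (fun x2 => indic (HaltsAt a b (x1, x2) n /\ ~ CorrectAt a b (x1, x2) n)) (tau1 a b) (b / 2) 0.
Proof.
  intros H Hx. pose proof H as [[Ha1 Ha2] _]. pose proof (tau1_bounds a b H).
  destruct (Iidx_cases a x1 Ha1) as [[E C]|[[E C]|[E C]]].
  - apply (slice_err_diag a b (drect_NW a b) x1 n (drect_NW_ok a b H)); [cbn; lra|].
    intros x2 Hx2. apply refines_of_rect1, rect1_NW; auto; strip_bounds Hx2.
  - eapply (slice_err_ErrFree a b x1 (tau1 a b) (b / 2) _ n ltac:(lra)).
    + intros x2 Hx2. apply rect1_N0; auto; lra.
    + intros x2 Hx2. apply UniqueNearest_N0; cbn; auto; lra.
    + intros p [[] []]. apply UniqueNearest_N0; auto; cbn in *; lra.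
  - apply (slice_err_diag a b (drect_NE a b) x1 n (drect_NE_ok a b H)); [cbn; lra|].
    intros x2 Hx2. apply refines_of_rect1, rect1_NE; auto; strip_bounds Hx2.
Qed.

Lemma slice_err_bot a b x1 n : lattice_params a b -> - / 2 <= x1 <= / 2 ->
  is_RInt (fun x2 => indic (HaltsAt a b (x1, x2) n /\ ~ CorrectAt a b (x1, x2) n))
    (- b / 2) (- tau1 a b) 0.
Proof.
  intros H Hx. pose proof H as [[Ha1 Ha2] _]. pose proof (tau1_bounds a b H).
  destruct (Iidx_cases a (- x1) Ha1) as [[E C]|[[E C]|[E C]]].
  - apply (slice_err_diag a b (drect_SE a b) x1 n (drect_SE_ok a b H)); [cbn; lra|].
    intros x2 Hx2. apply refines_of_rect1, rect1_SE; auto; strip_bounds Hx2.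
  - eapply (slice_err_ErrFree a b x1 (- b / 2) (- tau1 a b) _ n ltac:(lra)).
    + intros x2 Hx2. apply rect1_S0; auto; lra.
    + intros x2 Hx2. apply UniqueNearest_S0; cbn; auto; lra.
    + intros p [[] []]. apply UniqueNearest_S0; auto; cbn in *; lra.
  - apply (slice_err_diag a b (drect_SW a b) x1 n (drect_SW_ok a b H)); [cbn; lra|].
    intros x2 Hx2. apply refines_of_rect1, rect1_SW; auto; strip_bounds Hx2.
Qed.

Lemma slice_err_mid a b x1 n : lattice_params a b -> - / 2 < x1 < / 2 ->
  is_RInt (fun x2 => indic (HaltsAt a b (x1, x2) n /\ ~ CorrectAt a b (x1, x2) n))
    (- tau1 a b) (tau1 a b) 0.
Proof.
  intros H Hx. pose proof (tau1_bounds a b H).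
  eapply (slice_err_ErrFree a b x1 (- tau1 a b) (tau1 a b) _ n ltac:(lra)).
  - intros x2 Hx2. apply rect1_mid; lra.
  - intros x2 Hx2. apply UniqueNearest_mid; cbn; auto; lra.
  - intros p [[] []]. apply UniqueNearest_mid; auto.
Qed.

(* On the edges [x1 = +-1/2] of the middle strip the nearest lattice point is not unique, so the
   protocol, which halts there after round 1, does not decide correctly: a null set of errors. *)
Lemma not_CorrectAt_edge a b x1 x2 : lattice_params a b -> (x1 = / 2 \/ x1 = - / 2) ->
  - tau1 a b < x2 < tau1 a b -> ~ CorrectAt a b (x1, x2) 1.
Proof.
  intros H Hx Hx2 [u1 [u2 [U I]]]. pose proof (tau1_bounds a b H).
  simpl in I. rewrite rect1_mid in I by lra.
  assert (I0 := I (0, 0) ltac:(unfold InInterior; cbn; lra)).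
  assert (M0 := UniqueNearest_mid a b (0, 0) H ltac:(cbn; lra) ltac:(cbn; lra)).
  assert (Eu : (u1, u2) = (0%Z, 0%Z)).
  { destruct (Zpair_eq_dec (u1, u2) (0%Z, 0%Z)) as [|Hne]; auto.
    specialize (I0 0%Z 0%Z ltac:(congruence)). specialize (M0 u1 u2 Hne). lra. }
  injection Eu as -> ->.
  destruct Hx as [-> | ->].
  - specialize (U 1%Z 0%Z ltac:(congruence)). unfold dist2, lat in U; cbn in U. nra.
  - specialize (U (-1)%Z 0%Z ltac:(congruence)). unfold dist2, lat in U; cbn in U. nra.
Qed.

Lemma slice_err_mid_edge a b x1 n : lattice_params a b -> (x1 = / 2 \/ x1 = - / 2) ->
  is_RInt (fun x2 => indic (HaltsAt a b (x1, x2) n /\ ~ CorrectAt a b (x1, x2) n))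
    (- tau1 a b) (tau1 a b) (mid_slice a b n).
Proof.
  intros H Hx. pose proof (tau1_bounds a b H).
  replace (mid_slice a b n) with ((tau1 a b - - tau1 a b) * (if (n =? 1)%nat then 1 else 0))
    by (unfold mid_slice; destruct (n =? 1)%nat; ring).
  apply is_RInt_const_open; [lra|]. intros x2 Hx2.
  assert (Hh : HaltsAt a b (x1, x2) n <-> n = 1%nat)
    by (apply HaltsAt_ErrFree_iff; rewrite rect1_mid by lra; apply ErrFree_mid; auto).
  destruct (Nat.eqb_spec n 1).
  - subst. apply indic_true. split; [apply Hh; auto|]. apply not_CorrectAt_edge; auto.
  - apply indic_false. intros [A _]. apply Hh in A. auto.
Qed.

Definition cost_top (a b : R) (n : nat) (w : Z) : R :=
  log2 (/ Qd a b 1) + log2 (/ Pd a w) + 2 * INR (n - 1).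
Definition cost_bot (a b : R) (n : nat) (w : Z) : R :=
  log2 (/ Qd a b (-1)) + log2 (/ Pd a w) + 2 * INR (n - 1).
Definition cost_mid (a b : R) (n : nat) : R := log2 (/ Qd a b 0) + 0 + 2 * INR (n - 1).

Lemma RcostAt_top a b x1 x2 n : 0 < tau1 a b -> tau1 a b < x2 ->
  RcostAt a b (x1, x2) n = cost_top a b n (Iidx a x1).
Proof. intros. unfold RcostAt, cost1, W1. cbn [fst snd]. rewrite W2_top by auto. reflexivity. Qed.
Lemma RcostAt_bot a b x1 x2 n : x2 <= - tau1 a b ->
  RcostAt a b (x1, x2) n = cost_bot a b n (Iidx a (- x1)).
Proof. intros. unfold RcostAt, cost1, W1. cbn [fst snd]. rewrite W2_bot by auto. reflexivity. Qed.
Lemma RcostAt_mid a b x1 x2 n : - tau1 a b < x2 <= tau1 a b ->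
  RcostAt a b (x1, x2) n = cost_mid a b n.
Proof. intros. unfold RcostAt, cost1, W1. cbn [fst snd]. rewrite W2_mid by auto. reflexivity. Qed.

Lemma slice_halts a b x1 n : lattice_params a b -> (1 <= n)%nat ->
  is_RInt (fun x2 => indic (HaltsAt a b (x1, x2) n)) (- b / 2) (b / 2)
    (side_slice a b n (Iidx a (- x1)) + mid_slice a b n + side_slice a b n (Iidx a x1)).
Proof.
  intros H Hn.
  apply (is_RInt_Chasles_R _ _ (tau1 a b)); [apply (is_RInt_Chasles_R _ _ (- tau1 a b))|].
  - apply slice_halts_bot; auto.
  - apply slice_halts_mid; auto.
  - apply slice_halts_top; auto.
Qed.

Lemma slice_cost a b x1 n : lattice_params a b -> (1 <= n)%nat ->
  is_RInt (fun x2 => RcostAt a b (x1, x2) n * indic (HaltsAt a b (x1, x2) n)) (- b / 2) (b / 2)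
    (cost_bot a b n (Iidx a (- x1)) * side_slice a b n (Iidx a (- x1)) + cost_mid a b n * mid_slice a b n
     + cost_top a b n (Iidx a x1) * side_slice a b n (Iidx a x1)).
Proof.
  intros H Hn. pose proof (tau1_bounds a b H).
  apply (is_RInt_Chasles_R _ _ (tau1 a b)); [apply (is_RInt_Chasles_R _ _ (- tau1 a b))|];
    (eapply is_RInt_scal_open; [lra | |]).
  - apply slice_halts_bot; auto.
  - intros x2 Hx2. rewrite RcostAt_bot by lra. reflexivity.
  - apply slice_halts_mid; auto.
  - intros x2 Hx2. rewrite RcostAt_mid by lra. reflexivity.
  - apply slice_halts_top; auto.
  - intros x2 Hx2. rewrite RcostAt_top by lra. reflexivity.
Qed.

Lemma slice_err a b x1 n : lattice_params a b -> - / 2 < x1 < / 2 ->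
  is_RInt (fun x2 => indic (HaltsAt a b (x1, x2) n /\ ~ CorrectAt a b (x1, x2) n)) (- b / 2) (b / 2) 0.
Proof.
  intros H Hx. replace 0 with (0 + 0 + 0) by ring.
  apply (is_RInt_Chasles_R _ _ (tau1 a b)); [apply (is_RInt_Chasles_R _ _ (- tau1 a b))|].
  - apply slice_err_bot; auto; lra.
  - apply slice_err_mid; auto.
  - apply slice_err_top; auto; lra.
Qed.

Lemma slice_err_edge a b x1 n : lattice_params a b -> (x1 = / 2 \/ x1 = - / 2) ->
  is_RInt (fun x2 => indic (HaltsAt a b (x1, x2) n /\ ~ CorrectAt a b (x1, x2) n)) (- b / 2) (b / 2)
    (0 + mid_slice a b n + 0).
Proof.
  intros H Hx. assert (- / 2 <= x1 <= / 2) by lra.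
  apply (is_RInt_Chasles_R _ _ (tau1 a b)); [apply (is_RInt_Chasles_R _ _ (- tau1 a b))|].
  - apply slice_err_bot; auto.
  - apply slice_err_mid_edge; auto.
  - apply slice_err_top; auto.
Qed.

(** * Iterated integrals over the Babai cell *)

Definition mean_P (a : R) (phi : Z -> R) : R :=
  Pd a (-1) * phi (-1)%Z + Pd a 0 * phi 0%Z + Pd a 1 * phi 1%Z.

Lemma Pd_values a : Pd a (-1) = a / 2 /\ Pd a 0 = / 2 /\ Pd a 1 = (1 - a) / 2.
Proof. unfold Pd, Ihi, Ilo. simpl. repeat split; field. Qed.

Lemma Qd_values a b : 0 < b ->
  Qd a b (-1) = (b / 2 - tau1 a b) / b /\ Qd a b 1 = (b / 2 - tau1 a b) / b /\
  Qd a b 0 = 2 * tau1 a b / b.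
Proof. intros. unfold Qd, Jhi, Jlo. simpl. repeat split; field; lra. Qed.

Lemma is_RInt_Iidx a (phi : Z -> R) : 0 < a < / 2 ->
  is_RInt (fun x1 => phi (Iidx a x1)) (- / 2) (/ 2) (mean_P a phi).
Proof.
  intros [Ha1 Ha2]. destruct (Pd_values a) as (P1 & P2 & P3). unfold mean_P. rewrite P1, P2, P3.
  apply (is_RInt_Chasles_R _ _ (a / 2)); [apply (is_RInt_Chasles_R _ _ ((a - 1) / 2))|].
  - replace (a / 2 * phi (-1)%Z) with (((a - 1) / 2 - - / 2) * phi (-1)%Z) by field.
    apply is_RInt_const_open; [lra|]. intros; rewrite Iidx_m1 by lra; auto.
  - replace (/ 2 * phi 0%Z) with ((a / 2 - (a - 1) / 2) * phi 0%Z) by field.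
    apply is_RInt_const_open; [lra|]. intros; rewrite Iidx_0 by lra; auto.
  - replace ((1 - a) / 2 * phi 1%Z) with ((/ 2 - a / 2) * phi 1%Z) by field.
    apply is_RInt_const_open; [lra|]. intros; rewrite Iidx_1 by lra; auto.
Qed.

Lemma is_RInt_Iidx_opp a (phi : Z -> R) : 0 < a < / 2 ->
  is_RInt (fun x1 => phi (Iidx a (- x1))) (- / 2) (/ 2) (mean_P a phi).
Proof.
  intros [Ha1 Ha2]. destruct (Pd_values a) as (P1 & P2 & P3). unfold mean_P. rewrite P1, P2, P3.
  replace (a / 2 * phi (-1)%Z + / 2 * phi 0%Z + (1 - a) / 2 * phi 1%Z) with
    ((1 - a) / 2 * phi 1%Z + / 2 * phi 0%Z + a / 2 * phi (-1)%Z) by ring.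
  apply (is_RInt_Chasles_R _ _ ((1 - a) / 2)); [apply (is_RInt_Chasles_R _ _ (- (a / 2)))|].
  - replace ((1 - a) / 2 * phi 1%Z) with ((- (a / 2) - - / 2) * phi 1%Z) by field.
    apply is_RInt_const_open; [lra|]. intros; rewrite Iidx_1 by lra; auto.
  - replace (/ 2 * phi 0%Z) with (((1 - a) / 2 - - (a / 2)) * phi 0%Z) by field.
    apply is_RInt_const_open; [lra|]. intros; rewrite Iidx_0 by lra; auto.
  - replace (a / 2 * phi (-1)%Z) with ((/ 2 - (1 - a) / 2) * phi (-1)%Z) by field.
    apply is_RInt_const_open; [lra|]. intros; rewrite Iidx_m1 by lra; auto.
Qed.

Lemma is_RInt_const_unit (c : R) : is_RInt (fun _ => c) (- / 2) (/ 2) c.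
Proof.
  assert (X : is_RInt (fun _ : R => c) (- / 2) (/ 2) ((/ 2 - - / 2) * c))
    by (apply is_RInt_const_open; [lra | auto]).
  replace ((/ 2 - - / 2) * c) with c in X by field. exact X.
Qed.

Lemma is_RInt_plus3 (f g h : R -> R) L U u v w :
  is_RInt f L U u -> is_RInt g L U v -> is_RInt h L U w ->
  is_RInt (fun x => f x + g x + h x) L U (u + v + w).
Proof.
  intros A B C. rewrite <- !plus_R.
  apply (@is_RInt_plus R_NormedModule); [apply (@is_RInt_plus R_NormedModule)|]; auto.
Qed.

(* [b] times the probabilities of [N = n] and [b] times [E[R 1{N = n}]]. *)
Definition halt_mass (a b : R) (n : nat) : R :=
  mean_P a (side_slice a b n) + mid_slice a b n + mean_P a (side_slice a b n).
Definition cost_mass (a b : R) (n : nat) : R :=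
  mean_P a (fun w => cost_bot a b n w * side_slice a b n w) + cost_mid a b n * mid_slice a b n
  + mean_P a (fun w => cost_top a b n w * side_slice a b n w).

Lemma Int2_halts a b n : lattice_params a b -> (1 <= n)%nat ->
  Int2_is b (fun x1 x2 => indic (HaltsAt a b (x1, x2) n)) (halt_mass a b n).
Proof.
  intros H Hn. pose proof H as [Ha _].
  apply (Int2_is_of_slices b _
           (fun x1 => side_slice a b n (Iidx a (- x1)) + mid_slice a b n + side_slice a b n (Iidx a x1))).
  - intros x1 Hx. eexists. apply slice_halts; auto.
  - intros x1 Hx. apply slice_halts; auto.
  - apply is_RInt_plus3; [apply is_RInt_Iidx_opp | apply is_RInt_const_unit | apply is_RInt_Iidx]; auto.
Qed.

Lemma Int2_cost a b n : lattice_params a b -> (1 <= n)%nat ->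
  Int2_is b (fun x1 x2 => RcostAt a b (x1, x2) n * indic (HaltsAt a b (x1, x2) n)) (cost_mass a b n).
Proof.
  intros H Hn. pose proof H as [Ha _].
  apply (Int2_is_of_slices b _ (fun x1 =>
           cost_bot a b n (Iidx a (- x1)) * side_slice a b n (Iidx a (- x1))
           + cost_mid a b n * mid_slice a b n
           + cost_top a b n (Iidx a x1) * side_slice a b n (Iidx a x1))).
  - intros x1 Hx. eexists. apply slice_cost; auto.
  - intros x1 Hx. apply slice_cost; auto.
  - apply is_RInt_plus3;
      [apply (is_RInt_Iidx_opp a (fun w => cost_bot a b n w * side_slice a b n w)) | apply is_RInt_const_unit |
       apply (is_RInt_Iidx a (fun w => cost_top a b n w * side_slice a b n w))]; auto.
Qed.

Lemma Int2_err a b n : lattice_params a b ->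
  Int2_is b (fun x1 x2 => indic (HaltsAt a b (x1, x2) n /\ ~ CorrectAt a b (x1, x2) n)) 0.
Proof.
  intros H. apply (Int2_is_of_slices b _ (fun _ => 0)).
  - intros x1 Hx. destruct (Req_dec x1 (/ 2)); [|destruct (Req_dec x1 (- / 2))].
    1,2: eexists; apply slice_err_edge; auto.
    exists 0. apply slice_err; auto. lra.
  - intros x1 Hx. apply slice_err; auto.
  - apply is_RInt_const_unit.
Qed.

(** * Summing over the number of rounds *)

Lemma pow_two_thirds_bound N : (INR N + 2) * (2 / 3) ^ N <= 2.
Proof.
  induction N as [|N IH]; [simpl; lra|].
  rewrite S_INR. simpl pow.
  assert (0 < (2 / 3) ^ N) by (apply pow_lt; lra). pose proof (pos_INR N). nra.
Qed.

Lemma pow_half_linear_bound N : (INR N + 2) * (/ 2) ^ N <= 2 * (3 / 4) ^ N.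
Proof.
  replace ((/ 2) ^ N) with ((2 / 3) ^ N * (3 / 4) ^ N) by (rewrite <- Rpow_mult_distr; f_equal; field).
  assert (0 < (3 / 4) ^ N) by (apply pow_lt; lra).
  pose proof (pow_two_thirds_bound N). nra.
Qed.

Definition geom_lin (A C D : R) (k : nat) : R :=
  if (k =? 0)%nat then A else (/ 2) ^ k * (C + D * INR k).

Lemma geom_lin_partial A C D N :
  sum_f_R0 (geom_lin A C D) N = A + C * (1 - (/ 2) ^ N) + D * (2 - (INR N + 2) * (/ 2) ^ N).
Proof.
  induction N as [|N IH]; [unfold geom_lin; simpl; ring|].
  simpl sum_f_R0. rewrite IH. unfold geom_lin. simpl (S N =? 0)%nat. rewrite S_INR. simpl pow. field.
Qed.

Lemma geom_lin_sum A C D : infinite_sum (geom_lin A C D) (A + C + 2 * D).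
Proof.
  intros eps Heps.
  set (K := Rabs C + 2 * Rabs D + 1).
  assert (HK : 0 < K) by (unfold K; pose proof (Rabs_pos C); pose proof (Rabs_pos D); lra).
  destruct (pow_lt_1_zero (3 / 4) ltac:(rewrite Rabs_right; lra) (eps / K)
              ltac:(apply Rdiv_lt_0_compat; lra)) as [N HN].
  exists N. intros n Hn. specialize (HN n Hn). rewrite Rabs_right in HN by (apply Rle_ge, pow_le; lra).
  unfold R_dist. rewrite geom_lin_partial.
  replace (A + C * (1 - (/ 2) ^ n) + D * (2 - (INR n + 2) * (/ 2) ^ n) - (A + C + 2 * D))
    with (- (C * (/ 2) ^ n + D * ((INR n + 2) * (/ 2) ^ n))) by ring.
  rewrite Rabs_Ropp.
  pose proof (pow_half_linear_bound n).
  assert (P1 : 0 < (/ 2) ^ n) by (apply pow_lt; lra).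
  assert (P2 : (/ 2) ^ n <= (3 / 4) ^ n) by (apply pow_incr; lra).
  assert (P3 : 0 <= (INR n + 2) * (/ 2) ^ n) by (apply Rmult_le_pos; [pose proof (pos_INR n) |]; lra).
  eapply Rle_lt_trans; [apply Rabs_triang|]. rewrite (Rabs_mult C), (Rabs_mult D).
  rewrite (Rabs_right ((/ 2) ^ n)), (Rabs_right ((INR n + 2) * (/ 2) ^ n)) by lra.
  assert (Rabs C * (/ 2) ^ n <= Rabs C * (3 / 4) ^ n) by (apply Rmult_le_compat_l; [apply Rabs_pos | lra]).
  assert (Rabs D * ((INR n + 2) * (/ 2) ^ n) <= Rabs D * (2 * (3 / 4) ^ n))
    by (apply Rmult_le_compat_l; [apply Rabs_pos | lra]).
  assert (K * (3 / 4) ^ n < eps).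
  { apply (Rmult_lt_compat_l K) in HN; auto. replace (K * (eps / K)) with eps in HN by (field; lra). lra. }
  unfold K in *. pose proof (pow_lt (3 / 4) n ltac:(lra)). nra.
Qed.

Lemma infinite_sum_ext (f g : nat -> R) l : (forall k, f k = g k) -> infinite_sum f l -> infinite_sum g l.
Proof.
  intros E H eps He. destruct (H eps He) as [N HN]. exists N. intros n Hn.
  rewrite <- (sum_eq f g n) by auto. auto.
Qed.

Lemma halt_mass_S a b k :
  halt_mass a b (S k) =
  if (k =? 0)%nat then (b / 2 - tau1 a b) + 2 * tau1 a b else (b / 2 - tau1 a b) * (/ 2) ^ k.
Proof.
  destruct (Pd_values a) as (P1 & P2 & P3).
  unfold halt_mass, mean_P.
  rewrite !(side_slice_diag a b (S k) (-1)), !(side_slice_diag a b (S k) 1), !side_slice_0 by discriminate.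
  rewrite P1, P2, P3. unfold mid_slice.
  destruct k as [|k]; [simpl; field|].
  replace (S (S k) - 1)%nat with (S k) by lia. cbn [Nat.eqb]. rewrite pow_inv.
  field. apply pow_nonzero. lra.
Qed.

Definition cost_coef_C a b := (b / 2 - tau1 a b) / b *
  (Pd a (-1) * (log2 (/ Qd a b (-1)) + log2 (/ Qd a b 1) + 2 * log2 (/ Pd a (-1)))
   + Pd a 1 * (log2 (/ Qd a b (-1)) + log2 (/ Qd a b 1) + 2 * log2 (/ Pd a 1))).
Definition cost_coef_D a b := (b / 2 - tau1 a b) / b * (4 * (Pd a (-1) + Pd a 1)).

Lemma cost_mass_S a b k : 0 < b -> (1 <= k)%nat ->
  cost_mass a b (S k) / b = (/ 2) ^ k * (cost_coef_C a b + cost_coef_D a b * INR k).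
Proof.
  intros Hb Hk.
  unfold cost_mass, mean_P.
  rewrite !(side_slice_diag a b (S k) (-1)), !(side_slice_diag a b (S k) 1), !side_slice_0 by discriminate.
  unfold mid_slice, cost_coef_C, cost_coef_D, cost_bot, cost_top, cost_mid.
  destruct k as [|k]; [lia|].
  replace (S (S k) - 1)%nat with (S k) by lia. cbn [Nat.eqb]. rewrite pow_inv.
  field. split; [lra | apply pow_nonzero; lra].
Qed.

Lemma log2_inv x : 0 < x -> log2 (/ x) = - log2 x.
Proof. intro. unfold log2. rewrite ln_Rinv by auto. field. pose proof ln_lt_2. lra. Qed.

Lemma log2_half : log2 (/ 2) = -1.
Proof. unfold log2. rewrite ln_Rinv by lra. field. pose proof ln_lt_2. lra. Qed.

Lemma lattice_params_polar rho theta : 1 <= rho -> 0 < rho * cos theta < / 2 -> 0 < rho * sin theta ->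
  lattice_params (rho * cos theta) (rho * sin theta).
Proof.
  intros H1 H2 H3. do 2 (split; auto).
  pose proof (sin2_cos2 theta) as E. unfold Rsqr in E.
  replace (rho * cos theta * (rho * cos theta) + rho * sin theta * (rho * sin theta))
    with (rho * rho * (sin theta * sin theta + cos theta * cos theta)) by ring.
  rewrite E. nra.
Qed.

Lemma halting_prob_sum a b : lattice_params a b -> infinite_sum (fun k => halt_mass a b (S k) / b) 1.
Proof.
  intros H. pose proof H as [_ [Hb _]]. set (t := tau1 a b).
  apply (infinite_sum_ext (geom_lin ((b / 2 - t + 2 * t) / b) ((b / 2 - t) / b) 0)).
  - intro k. unfold geom_lin. rewrite halt_mass_S. fold t. destruct k; simpl; field; lra.
  - replace 1 with ((b / 2 - t + 2 * t) / b + (b / 2 - t) / b + 2 * 0) by (field; lra). apply geom_lin_sum.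
Qed.

Lemma rounds_sum a b : lattice_params a b ->
  infinite_sum (fun k => INR (S k) * (halt_mass a b (S k) / b)) (Nbar a b).
Proof.
  intros H. pose proof H as [_ [Hb _]]. set (t := tau1 a b).
  destruct (Pd_values a) as (_ & P2 & _). destruct (Qd_values a b Hb) as (_ & _ & Q3).
  apply (infinite_sum_ext (geom_lin ((b / 2 - t + 2 * t) / b) ((b / 2 - t) / b) ((b / 2 - t) / b))).
  - intro k. unfold geom_lin. rewrite halt_mass_S. fold t.
    destruct k; [simpl; field; lra|]. cbn [Nat.eqb]. rewrite !S_INR. field. lra.
  - replace (Nbar a b) with ((b / 2 - t + 2 * t) / b + (b / 2 - t) / b + 2 * ((b / 2 - t) / b))
      by (unfold Nbar; rewrite P2, Q3; fold t; field; lra).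
    apply geom_lin_sum.
Qed.

Lemma Rbar_eq a b : lattice_params a b ->
  cost_mass a b 1 / b + cost_coef_C a b + 2 * cost_coef_D a b = Rbar a b.
Proof.
  intro H. pose proof H as [[Ha1 Ha2] [Hb Hab]]. pose proof (tau1_bounds a b H).
  destruct (Pd_values a) as (P1 & P2 & P3). destruct (Qd_values a b Hb) as (Q1 & Q2 & Q3).
  assert (QM : Qd a b (-1) = Qd a b 1) by (rewrite Q1, Q2; auto).
  assert (HQ1 : 0 < Qd a b 1) by (rewrite Q2; apply Rdiv_lt_0_compat; lra).
  assert (HQ0 : 0 < Qd a b 0) by (rewrite Q3; apply Rdiv_lt_0_compat; lra).
  assert (HPm : 0 < Pd a (-1)) by (rewrite P1; lra).
  assert (HPp : 0 < Pd a 1) by (rewrite P3; lra).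
  unfold cost_mass, mean_P, cost_coef_C, cost_coef_D, Rbar, H3, cost_bot, cost_top, cost_mid,
    side_slice, mid_slice.
  cbn [Z.eqb Nat.eqb Pos.eqb Nat.sub]. change (INR 0) with 0.
  rewrite !QM, !log2_inv by (auto; rewrite P2; lra).
  rewrite !P2, !log2_half, Q2, Q3, P1, P3.
  field. lra.
Qed.

Lemma cost_sum a b : lattice_params a b -> infinite_sum (fun k => cost_mass a b (S k) / b) (Rbar a b).
Proof.
  intros H. pose proof H as [_ [Hb _]].
  apply (infinite_sum_ext (geom_lin (cost_mass a b 1 / b) (cost_coef_C a b) (cost_coef_D a b))).
  - intro k. unfold geom_lin. destruct k as [|k]; [reflexivity|].
    cbn [Nat.eqb]. rewrite cost_mass_S by (auto; lia). reflexivity.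
  - rewrite <- Rbar_eq by auto. apply geom_lin_sum.
Qed.

Theorem mainTheorem1 (rho theta : R) :
  1 <= rho -> 0 < rho * cos theta < / 2 -> 0 < rho * sin theta ->
  let a := rho * cos theta in
  let b := rho * sin theta in
  exists p r : nat -> R,
    (* p n = Pr(N(X) = n), X uniform on the Babai cell (density 1/b) *)
    (forall n : nat, (1 <= n)%nat ->
       Int2_is b (fun x1 x2 => indic (HaltsAt a b (x1, x2) n)) (b * p n)) /\
    (* r n = E[R(X) 1{N(X) = n}] *)
    (forall n : nat, (1 <= n)%nat ->
       Int2_is b (fun x1 x2 => RcostAt a b (x1, x2) n * indic (HaltsAt a b (x1, x2) n))
               (b * r n)) /\
    infinite_sum (fun k => p (S k)) 1 /\
    (forall n : nat, (1 <= n)%nat ->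
       Int2_is b (fun x1 x2 => indic (HaltsAt a b (x1, x2) n /\ ~ CorrectAt a b (x1, x2) n)) 0) /\
    infinite_sum (fun k => r (S k)) (Rbar a b) /\
    infinite_sum (fun k => INR (S k) * p (S k)) (Nbar a b).
Proof.
  intros H1 H2 H3 a b.
  assert (H : lattice_params a b) by (apply lattice_params_polar; auto).
  pose proof H as [_ [Hb _]].
  exists (fun n => halt_mass a b n / b), (fun n => cost_mass a b n / b).
  repeat split.
  - intros n Hn. replace (b * (halt_mass a b n / b)) with (halt_mass a b n) by (field; lra).
    apply Int2_halts; auto.
  - intros n Hn. replace (b * (cost_mass a b n / b)) with (cost_mass a b n) by (field; lra).
    apply Int2_cost; auto.
  - apply halting_prob_sum; auto.
  - intros n Hn. apply Int2_err; auto.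
  - apply cost_sum; auto.
  - apply rounds_sum; auto.
Qed.
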